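(* For every $\mathbf U\in\mathcal E([0,T];\mathcal A_X^{\otimes2})$, $$\|\delta^X(\mathbf U)\|_{L^2(\varphi)}\le\|\mathbf U\|_{\mathbb D^{1,2}(\mathcal H)},$$ where $\|\mathbf U\|_{\mathbb D^{1,2}(\mathcal H)}^2:=\|\mathbf U\|^2_{L^2(\varphi\times\varphi;\mathcal H)}+\|D^X_1\mathbf U\|^2_{L^2(\varphi\times\varphi\times\varphi;\mathcal H\otimes\mathcal H)}+\|D^X_2\mathbf U\|^2_{L^2(\varphi\times\varphi\times\varphi;\mathcal H\otimes\mathcal H)}$.
   Context: NC probability space: a pair $(\mathcal A,\varphi)$ with $\mathcal A$ a unital complex Banach $*$-algebra with $\|XY\|\le\|X\|\|Y\|$, $\|X^*X\|=\|X\|^2$, and $\varphi$ a linear functional with $\varphi(1)=1$, $\varphi(XY)=\varphi(YX)$, $\varphi(X^*X)\ge0$, $\varphi(X^*X)=0\Rightarrow X=0$; $\|Z\|_{L^2(\varphi)}:=\varphi(ZZ^* )^{1/2}$. For $k\ge2$, $\mathcal A^{\otimes k}$ is the algebraic tensor product with componentwise product, involution $(F_1\otimes\cdots\otimes F_k)^*=F_1^*\otimes\cdots\otimes F_k^*$, and $\varphi^{\times k}(F_1\otimes\cdots\otimes F_k)=\varphi(F_1)\cdots\varphi(F_k)$, extended linearly. $(F_1\otimes F_2)\sharp G:=F_1GF_2$, $(\mathrm{Id}\times\varphi\times\mathrm{Id})(F_1\otimes F_2\otimes F_3):=\varphi(F_2)F_1F_3$. A centered semicircular process $\{X_t\}_{t\in[0,T]}$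 is a family of self-adjoint elements with $\varphi(X_{t_1}\cdots X_{t_r})=\sum_{\pi\in NC_2(r)}\prod_{\{p,q\}\in\pi}\varphi(X_{t_p}X_{t_q})$ for even $r$ (non-crossing pairings) and vanishing odd moments. Fix $T>0$ and such a process; $\mathcal A_X$ is the unital subalgebra generated by it. Step functions $h=\sum\alpha_i\mathbf 1_{[a_i,b_i)}$ form $\mathcal E([0,T];\mathbb R)$; $X(h):=\sum\alpha_i(X_{b_i}-X_{a_i})$; $\mathcal H$ is the completion of step functions for $\langle\mathbf 1_{[0,s]},\mathbf 1_{[0,t]}\rangle_{\mathcal H}=\varphi(X_sX_t)$. $\mathcal E([0,T];E)$: finite sums $\sum x_ih_i(t)$, $x_i\in E$; $\mathcal E([0,T]^2;E)$: finite sums $(s,t)\mapsto\sum x_ih_i(s)k_i(t)$. Pairings: $\langle xh,k\rangle_{\mathcal H}:=x\langle h,k\rangle_{\mathcal H}$, $\langle xh;yk\rangle_{\mathcal H}:=(x\cdot y)\langle h,k\rangle_{\mathcal H}$; $(\sum x_ih_i)^*:=\sum x_i^*h_i$. $D^X:\mathcal A_X\to\mathcal E([0,T];\mathcal A_X^{\otimes2})$: linear, $D^X1=0$, $D^X(X(h_1)\cdots X(h_m))=\sum_{i=1}^m[(X(h_1)\cdots X(h_{i-1}))\otimes(X(h_{i+1})\cdots X(h_m))]h_i$. $D^X_1(F_1\otimes F_2):=D^XF_1\otimes F_2$, $D^X_2(F_1\otimes F_2):=F_1\otimes D^XF_2$, $D^X:=D^X_1+D^X_2$. Divergence: $\delta^X(\mathbf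 Fh):=\mathbf F\sharp X(h)-(\mathrm{Id}\times\varphi\times\mathrm{Id})(\langle D^X\mathbf F,h\rangle_{\mathcal H})$, extended linearly to $\mathcal E([0,T];\mathcal A_X^{\otimes2})$. For $\mathbf U=\mathbf Fh\in\mathcal E([0,T];\mathcal A_X^{\otimes 2})$, $D^X_i\mathbf U\in\mathcal E([0,T]^2;\mathcal A_X^{\otimes3})$ denotes $(s,t)\mapsto h(s)\,(D^X_i\mathbf F)(t)$, extended linearly. Norms: $\|\mathbf U\|^2_{L^2(\varphi\times\varphi;\mathcal H)}:=(\varphi\times\varphi)(\langle\mathbf U;\mathbf U^*\rangle_{\mathcal H})$; for $\mathbb U\in\mathcal E([0,T]^2;\mathcal A_X^{\otimes3})$, $\|\mathbb U\|^2_{L^2(\varphi\times\varphi\times\varphi;\mathcal H\otimes\mathcal H)}:=(\varphi\times\varphi\times\varphi)(\langle\mathbb U,\mathbb U\rangle_{\mathcal H\otimes\mathcal H})$, where $\langle\mathbb F h(s)k(t),\mathbb G\ell(s)m(t)\rangle_{\mathcal H\otimes\mathcal H}:=(\mathbb F\cdot\mathbb G^* )\langle h,\ell\rangle_{\mathcal H}\langle k,m\rangle_{\mathcal H}$, extended sesquilinearly. *)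

From Stdlib Require Import Reals List Arith.
Import ListNotations.
Open Scope R_scope.

Record Cx := mkC { Re : R ; Im : R }.
Definition C0 : Cx := mkC 0 0.
Definition C1 : Cx := mkC 1 0.
Definition RC (r : R) : Cx := mkC r 0.
Definition Cadd (z w : Cx) : Cx := mkC (Re z + Re w) (Im z + Im w).
Definition Copp (z : Cx) : Cx := mkC (- Re z) (- Im z).
Definition Cmul (z w : Cx) : Cx :=
  mkC (Re z * Re w - Im z * Im w) (Re z * Im w + Im z * Re w).
Definition Cconj (z : Cx) : Cx := mkC (Re z) (- Im z).
Definition Cmod (z : Cx) : R := sqrt (Re z * Re z + Im z * Im z).
Definition csum (l : list Cx) : Cx := fold_right Cadd C0 l.
Definition cprod (l : list Cx) : Cx := fold_right Cmul C1 l.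

Record NCPS := {
  car :> Type;
  azero : car; aone : car;
  aadd : car -> car -> car; aopp : car -> car;
  asmul : Cx -> car -> car; amul : car -> car -> car;
  astar : car -> car; anorm : car -> R; phi : car -> Cx;
  ax_addA : forall x y z, aadd x (aadd y z) = aadd (aadd x y) z;
  ax_addC : forall x y, aadd x y = aadd y x;
  ax_add0 : forall x, aadd x azero = x;
  ax_addN : forall x, aadd x (aopp x) = azero;
  ax_smulA : forall a b x, asmul a (asmul b x) = asmul (Cmul a b) x;
  ax_smul1 : forall x, asmul C1 x = x;
  ax_smulDr : forall a x y, asmul a (aadd x y) = aadd (asmul a x) (asmul a y);
  ax_smulDl : forall a b x, asmul (Cadd a b) x = aadd (asmul a x) (asmul b x);
  ax_mulA : forall x y z, amul x (amul y z) = amul (amul x y) z;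
  ax_mul1l : forall x, amul aone x = x;
  ax_mul1r : forall x, amul x aone = x;
  ax_mulDl : forall x y z, amul (aadd x y) z = aadd (amul x z) (amul y z);
  ax_mulDr : forall x y z, amul x (aadd y z) = aadd (amul x y) (amul x z);
  ax_smulMl : forall a x y, asmul a (amul x y) = amul (asmul a x) y;
  ax_smulMr : forall a x y, asmul a (amul x y) = amul x (asmul a y);
  ax_starK : forall x, astar (astar x) = x;
  ax_starD : forall x y, astar (aadd x y) = aadd (astar x) (astar y);
  ax_starZ : forall a x, astar (asmul a x) = asmul (Cconj a) (astar x);
  ax_starM : forall x y, astar (amul x y) = amul (astar y) (astar x);
  ax_norm_ge0 : forall x, 0 <= anorm x;
  ax_norm_eq0 : forall x, anorm x = 0 -> x = azero;
  ax_normD : forall x y, anorm (aadd x y) <= anorm x + anorm y;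
  ax_normZ : forall a x, anorm (asmul a x) = Cmod a * anorm x;
  ax_normM : forall x y, anorm (amul x y) <= anorm x * anorm y;
  ax_normC : forall x, anorm (amul (astar x) x) = anorm x * anorm x;
  ax_complete : forall u : nat -> car,
    (forall eps, 0 < eps -> exists N, forall n m, (N <= n)%nat -> (N <= m)%nat ->
        anorm (aadd (u n) (aopp (u m))) < eps) ->
    exists l, forall eps, 0 < eps -> exists N, forall n, (N <= n)%nat ->
        anorm (aadd (u n) (aopp l)) < eps;
  ax_phiD : forall x y, phi (aadd x y) = Cadd (phi x) (phi y);
  ax_phiZ : forall a x, phi (asmul a x) = Cmul a (phi x);
  ax_phi1 : phi aone = C1;
  ax_phiT : forall x y, phi (amul x y) = phi (amul y x);
  ax_phi_pos : forall x, Im (phi (amul (astar x) x)) = 0 /\ 0 <= Re (phi (amul (astar x) x));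
  ax_phi_faithful : forall x, phi (amul (astar x) x) = C0 -> x = azero
}.

Arguments azero {_}. Arguments aone {_}.
Arguments aadd {_} _ _. Arguments aopp {_} _. Arguments asmul {_} _ _.
Arguments amul {_} _ _. Arguments astar {_} _. Arguments anorm {_} _. Arguments phi {_} _.

Section Defs.
Variable P : NCPS.

Definition asub (x y : P) : P := aadd x (aopp y).
Definition asum (l : list P) : P := fold_right aadd azero l.
Definition aprod (l : list P) : P := fold_right amul aone l.

(* ncp fuel l : the list of all non-crossing pairings of the (ordered) list l:
   the first element x is paired with some y such that the block strictly between
   them has even length; that block and the part after y are then paired
   non-crossingly and independently. Each pairing is produced exactly once. *)
Fixpoint ncp (fuel : nat) (l : list nat) : list (list (nat * nat)) :=
  match l with
  | [] => [[]]
  | x :: rest =>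
    match fuel with
    | O => []
    | S f =>
      flat_map (fun k =>
        if Nat.even k then
          match nth_error rest k with
          | Some y =>
              flat_map (fun p1 => map (fun p2 => (x, y) :: p1 ++ p2)
                                      (ncp f (skipn (S k) rest)))
                       (ncp f (firstn k rest))
          | None => []
          end
        else []) (seq 0 (length rest))
    end
  end.

Definition NC2 (r : nat) : list (list (nat * nat)) := ncp r (seq 0 r).

Definition semicircular (T : R) (X : R -> P) : Prop :=
  (forall t, 0 <= t <= T -> astar (X t) = X t) /\
  (forall ts : list R, Forall (fun t => 0 <= t <= T) ts ->
     phi (aprod (map X ts)) =
       if Nat.even (length ts) then
         csum (map (fun pi => cprod (map (fun pq =>
                   phi (amul (X (nth (fst pq) ts 0)) (X (nth (snd pq) ts 0)))) pi))
                   (NC2 (length ts)))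
       else C0).

Variable X : R -> P.

(* step functions h = sum alpha_i 1_[a_i,b_i), stored as (alpha_i, a_i, b_i) *)
Definition step := list (R * R * R).
Definition step_ok (T : R) (h : step) : Prop :=
  Forall (fun x => match x with (al, a, b) => 0 <= a /\ a <= b /\ b <= T end) h.

Definition Xh (h : step) : P :=
  asum (map (fun x => match x with (al, a, b) =>
              asmul (RC al) (asub (X b) (X a)) end) h).

(* <1_[0,s], 1_[0,t]>_H = phi(X_s X_t), extended bilinearly to step functions *)
Definition Kov (s t : R) : Cx := phi (amul (X s) (X t)).
Definition ipH (h k : step) : Cx :=
  csum (flat_map (fun x => match x with (al, a, b) =>
    map (fun y => match y with (be, c, d) =>
      Cmul (RC (al * be))
        (Cadd (Cadd (Kov b d) (Copp (Kov b c))) (Cadd (Copp (Kov a d)) (Kov a c)))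
    end) k end) h).

(* monomials X(h_1)...X(h_m), represented by the word [h_1;...;h_m] *)
Definition word := list step.
Definition ev (w : word) : P := aprod (map Xh w).

(* An element U = sum_k c_k (m1_k (x) m2_k) h_k of E([0,T]; A_X (x) A_X),
   with m1_k, m2_k monomials: list of (c_k, m1_k, m2_k, h_k). *)
Definition Uelt := list (Cx * word * word * step).

(* D^X(X(h_1)...X(h_m)) = sum_i [prefix_i (x) suffix_i] h_i *)
Definition DXw (w : word) : list (word * word * step) :=
  map (fun i => (firstn i w, skipn (S i) w, nth i w [])) (seq 0 (length w)).

(* D^X_1 and D^X_2 of c (m1 (x) m2): lists of (c, a, b, d, k) meaning c (a (x) b (x) d) k *)
Definition D1F (c : Cx) (m1 m2 : word) : list (Cx * word * word * word * step) :=
  map (fun x => match x with (p, s, k) => (c, p, s, m2, k) end) (DXw m1).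
Definition D2F (c : Cx) (m1 m2 : word) : list (Cx * word * word * word * step) :=
  map (fun x => match x with (p, s, k) => (c, m1, p, s, k) end) (DXw m2).

(* delta^X(F h) = F # X(h) - (Id x phi x Id)(<D^X F, h>_H) *)
Definition delta_term (t : Cx * word * word * step) : P :=
  match t with (c, m1, m2, h) =>
    asub (asmul c (amul (amul (ev m1) (Xh h)) (ev m2)))
         (asum (map (fun y => match y with (c', a, b, d, k) =>
                  asmul (Cmul c' (ipH k h)) (asmul (phi (ev b)) (amul (ev a) (ev d))) end)
                (D1F c m1 m2 ++ D2F c m1 m2)))
  end.
Definition deltaX (U : Uelt) : P := asum (map delta_term U).

Definition L2norm (Z : P) : R := sqrt (Re (phi (amul Z (astar Z)))).

(* ||U||^2_{L^2(phi x phi; H)} = (phi x phi)(<U ; U^star>_H) *)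
Definition normU2 (U : Uelt) : Cx :=
  csum (flat_map (fun x => match x with (c, a, b, h) =>
    map (fun y => match y with (c', a', b', h') =>
      Cmul (ipH h h')
        (Cmul (Cmul c (Cconj c'))
              (Cmul (phi (amul (ev a) (astar (ev a')))) (phi (amul (ev b) (astar (ev b'))))))
    end) U end) U).

(* elements of E([0,T]^2; A_X^{(x)3}): (c, a, b, d, h, k) meaning (s,t) |-> c (a (x) b (x) d) h(s) k(t) *)
Definition Velt := list (Cx * word * word * word * step * step).

(* D^X_i U : (s,t) |-> h(s) (D^X_i F)(t) *)
Definition D1U (U : Uelt) : Velt :=
  flat_map (fun x => match x with (c, m1, m2, h) =>
    map (fun y => match y with (c', a, b, d, k) => (c', a, b, d, h, k) end) (D1F c m1 m2) end) U.
Definition D2U (U : Uelt) : Velt :=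
  flat_map (fun x => match x with (c, m1, m2, h) =>
    map (fun y => match y with (c', a, b, d, k) => (c', a, b, d, h, k) end) (D2F c m1 m2) end) U.

Definition normV2 (V : Velt) : Cx :=
  csum (flat_map (fun x => match x with (c, a, b, d, hs, ht) =>
    map (fun y => match y with (c', a', b', d', hs', ht') =>
      Cmul (Cmul (ipH hs hs') (ipH ht ht'))
        (Cmul (Cmul c (Cconj c'))
          (Cmul (phi (amul (ev a) (astar (ev a'))))
            (Cmul (phi (amul (ev b) (astar (ev b')))) (phi (amul (ev d) (astar (ev d')))))))
    end) V end) V).

Definition D12norm (U : Uelt) : R :=
  sqrt (Re (normU2 U) + Re (normV2 (D1U U)) + Re (normV2 (D2U U))).

Definition Uelt_ok (T : R) (U : Uelt) : Prop :=
  Forall (fun x => match x with (c, m1, m2, h) =>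
    step_ok T h /\ Forall (step_ok T) m1 /\ Forall (step_ok T) m2 end) U.

End Defs.

(** The proof is a direct computation of [phi (delta U (delta U)^* )].  The
    semicircular moments obey the Wick recursion over non-crossing pairings:
    in [phi (X(h) Y)], [X(h)] is paired with one letter [X(k)] of the word [Y],
    contributing [<h,k>] times the moments of the two complementary subwords.
    Combined with traciality, this makes each divergence term dual to such a
    first-letter splitting, and expanding [phi (delta(F h) delta(G k)^* )]
    twice leaves three families of terms: [<U, U>], and the two inner products
    of [D_1 U] with the time-swapped [D_2 U] (one in each order).  Hence
      ||delta U||^2 + ||D_1 U - swap(D_2 U)||^2 = ||U||^2 + ||D_1 U||^2 + ||D_2 U||^2,
    and the second norm on the left is nonnegative because the Gram kernels of
    [phi] and of [<.,.>_H] are positive semidefinite, hence so is their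
    entrywise product (Schur). *)

From Stdlib Require Import Reals List Lra Lia Ring Field Arith.
From Pilot Require Import Defs.
Import ListNotations.
Open Scope R_scope.

Lemma Cx_ext z w : Re z = Re w -> Im z = Im w -> z = w.
Proof. destruct z, w; simpl; intros; subst; reflexivity. Qed.

Definition Csub z w := Cadd z (Copp w).

Lemma Cx_ring_theory : ring_theory C0 C1 Cadd Cmul Csub Copp (@eq Cx).
Proof. constructor; intros; apply Cx_ext; simpl; ring. Qed.
Add Ring Cx_ring : Cx_ring_theory.

Lemma Cadd_C0_r z : Cadd z C0 = z.
Proof. ring. Qed.

Lemma Cconj_add z w : Cconj (Cadd z w) = Cadd (Cconj z) (Cconj w).
Proof. apply Cx_ext; simpl; ring. Qed.
Lemma Cconj_mul z w : Cconj (Cmul z w) = Cmul (Cconj z) (Cconj w).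
Proof. apply Cx_ext; simpl; ring. Qed.
Lemma Cconj_opp z : Cconj (Copp z) = Copp (Cconj z).
Proof. apply Cx_ext; simpl; ring. Qed.

Definition sumC {A} (l : list A) (f : A -> Cx) : Cx := csum (map f l).

Lemma csum_map_sumC {A} (f : A -> Cx) l : csum (map f l) = sumC l f.
Proof. reflexivity. Qed.
Lemma csum_sumC l : csum l = sumC l (fun x => x).
Proof. unfold sumC; now rewrite map_id. Qed.

Lemma sumC_nil {A} (f : A -> Cx) : sumC [] f = C0.
Proof. reflexivity. Qed.
Lemma sumC_cons {A} (f : A -> Cx) x l : sumC (x :: l) f = Cadd (f x) (sumC l f).
Proof. reflexivity. Qed.
Lemma sumC_app {A} (f : A -> Cx) l1 l2 : sumC (l1 ++ l2) f = Cadd (sumC l1 f) (sumC l2 f).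
Proof. induction l1; unfold sumC in *; simpl; [ring | rewrite IHl1; ring]. Qed.
Lemma sumC_rev {A} (f : A -> Cx) l : sumC (rev l) f = sumC l f.
Proof. induction l; simpl; [reflexivity|]. rewrite sumC_app, !sumC_cons, sumC_nil, IHl. ring. Qed.
Lemma sumC_map {A B} (g : A -> B) (f : B -> Cx) l : sumC (map g l) f = sumC l (fun x => f (g x)).
Proof. unfold sumC; now rewrite map_map. Qed.
Lemma sumC_flat_map {A B} (g : A -> list B) (f : B -> Cx) l :
  sumC (flat_map g l) f = sumC l (fun x => sumC (g x) f).
Proof.
  induction l; [reflexivity|]. simpl flat_map. rewrite sumC_app, sumC_cons, IHl. reflexivity.
Qed.

Lemma sumC_ext {A} (f g : A -> Cx) l : (forall x, In x l -> f x = g x) -> sumC l f = sumC l g.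
Proof.
  intros H; induction l; [reflexivity|]. rewrite !sumC_cons. f_equal.
  - apply H; now left.
  - apply IHl; intros; apply H; now right.
Qed.

Lemma sumC_add {A} (f g : A -> Cx) l :
  sumC l (fun x => Cadd (f x) (g x)) = Cadd (sumC l f) (sumC l g).
Proof. induction l; [cbn; ring|]. rewrite !sumC_cons, IHl; ring. Qed.
Lemma sumC_mull {A} c (f : A -> Cx) l : sumC l (fun x => Cmul c (f x)) = Cmul c (sumC l f).
Proof. induction l; [cbn; ring|]. rewrite !sumC_cons, IHl; ring. Qed.
Lemma sumC_mulr {A} c (f : A -> Cx) l : sumC l (fun x => Cmul (f x) c) = Cmul (sumC l f) c.
Proof. induction l; [cbn; ring|]. rewrite !sumC_cons, IHl; ring. Qed.
Lemma sumC_opp {A} (f : A -> Cx) l : sumC l (fun x => Copp (f x)) = Copp (sumC l f).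
Proof. induction l; [cbn; ring|]. rewrite !sumC_cons, IHl; ring. Qed.
Lemma sumC_zero {A} (l : list A) : sumC l (fun _ => C0) = C0.
Proof. induction l; [reflexivity|]. rewrite sumC_cons, IHl; ring. Qed.
Lemma Cconj_sumC {A} (f : A -> Cx) l : Cconj (sumC l f) = sumC l (fun x => Cconj (f x)).
Proof.
  induction l; [apply Cx_ext; simpl; ring|]. rewrite !sumC_cons, Cconj_add, IHl. reflexivity.
Qed.

Lemma sumC_swap {A B} (f : A -> B -> Cx) l1 l2 :
  sumC l1 (fun x => sumC l2 (fun y => f x y)) = sumC l2 (fun y => sumC l1 (fun x => f x y)).
Proof.
  induction l1; simpl.
  - rewrite sumC_nil. symmetry. apply sumC_zero.
  - rewrite sumC_cons, IHl1, <- sumC_add. apply sumC_ext. intros; rewrite sumC_cons; reflexivity.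
Qed.

Lemma sumC_scale_eq {A} k d (f g : A -> Cx) l :
  (forall x, In x l -> Cmul k (f x) = Cmul d (g x)) -> Cmul k (sumC l f) = Cmul d (sumC l g).
Proof. intros H. rewrite <- !sumC_mull. apply sumC_ext; auto. Qed.

Lemma sumC_swap3 {A B C} (L1 : list A) (M : A -> list B) (L2 : list C) (G : A -> B -> C -> Cx) :
  sumC L1 (fun l => sumC (M l) (fun v => sumC L2 (fun u => G l v u))) =
  sumC L2 (fun u => sumC L1 (fun l => sumC (M l) (fun v => G l v u))).
Proof. rewrite <- sumC_swap. apply sumC_ext; intros l _. apply sumC_swap. Qed.

Fixpoint splits {A} (l : list A) : list (list A * A * list A) :=
  match l with
  | [] => []
  | x :: r => ([], x, r) :: map (fun t => match t with (p, y, s) => (x :: p, y, s) end) (splits r)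
  end.

Section Splits.
Context {A : Type}.

Lemma in_splits (l : list A) p x s : In (p, x, s) (splits l) -> l = p ++ x :: s.
Proof.
  revert p x s; induction l as [|a l IH]; intros p x s H; [destruct H|].
  destruct H as [H|H]; [injection H as <- <- <-; reflexivity|].
  apply in_map_iff in H. destruct H as [[[p' x'] s'] [E Hin]]. injection E as <- <- <-.
  rewrite (IH _ _ _ Hin). reflexivity.
Qed.

Lemma splits_Forall (Q : A -> Prop) l p x s : In (p, x, s) (splits l) -> Forall Q l ->
  Forall Q p /\ Q x /\ Forall Q s.
Proof.
  intros Hin H. apply in_splits in Hin. subst l. rewrite Forall_app in H. destruct H as [H1 H2].
  inversion H2; subst. auto.
Qed.

Lemma splits_app (l1 l2 : list A) :
  splits (l1 ++ l2) = map (fun t => match t with (p, x, s) => (p, x, s ++ l2) end) (splits l1)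
                   ++ map (fun t => match t with (p, x, s) => (l1 ++ p, x, s) end) (splits l2).
Proof.
  induction l1 as [|a l1 IH]; simpl.
  - rewrite map_ext with (g := fun t => t). now rewrite map_id. intros [[p x] s]; reflexivity.
  - f_equal. rewrite IH, map_app, !map_map. f_equal; apply map_ext; intros [[p x] s]; reflexivity.
Qed.

Lemma splits_rev (l : list A) :
  splits (rev l) = rev (map (fun u => match u with (p, x, s) => (rev s, x, rev p) end) (splits l)).
Proof.
  induction l as [|a l IH]; [reflexivity|].
  change (rev (a :: l)) with (rev l ++ [a]). rewrite splits_app, IH. cbn [splits map rev].
  rewrite map_rev, !map_map, app_nil_r. do 2 f_equal. apply map_ext. intros [[p x] s]. reflexivity.
Qed.

Lemma splits_seq (l : list A) d :
  map (fun k => (firstn k l, nth k l d, skipn (S k) l)) (seq 0 (length l)) = splits l.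
Proof.
  induction l as [|a l IH]; [reflexivity|]. simpl length. simpl seq. rewrite <- seq_shift. simpl.
  f_equal. rewrite map_map, <- IH, map_map. reflexivity.
Qed.

(* Both sides enumerate the decompositions [l = p ++ y :: p3 ++ z :: s3]. *)
Lemma sumC_splits_nested (F : list A -> A -> list A -> A -> list A -> Cx) (l : list A) :
  sumC (splits l) (fun t => match t with (p, y, s) =>
      sumC (splits s) (fun t' => match t' with (p3, z, s3) => F p y p3 z s3 end) end)
  = sumC (splits l) (fun t => match t with (p', z, s3) =>
      sumC (splits p') (fun t' => match t' with (p, y, p3) => F p y p3 z s3 end) end).
Proof.
  revert F; induction l as [|a l IH]; intros F; [reflexivity|].
  simpl splits. rewrite !sumC_cons, !sumC_map. simpl. rewrite sumC_nil.
  match goal with |- Cadd _ (sumC _ ?f1) = Cadd C0 (sumC _ ?f2) =>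
    assert (E1 : sumC (splits l) f1 = sumC (splits l) (fun t => match t with (p,y,s) =>
               sumC (splits s) (fun t' => match t' with (p3,z,s3) => F (a::p) y p3 z s3 end) end))
     by (apply sumC_ext; intros [[p x] s] _; reflexivity);
    assert (E2 : sumC (splits l) f2 = sumC (splits l) (fun t =>
               Cadd (match t with (p',z,s3) => F [] a p' z s3 end)
                    (match t with (p',z,s3) => sumC (splits p') (fun t' =>
                       match t' with (p,y,p3) => F (a::p) y p3 z s3 end) end)))
     by (apply sumC_ext; intros [[p x] s] _; simpl; rewrite sumC_cons, sumC_map; f_equal;
         apply sumC_ext; intros [[p' y] s'] _; reflexivity)
  end.
  rewrite E1, E2, IH, sumC_add. ring.
Qed.

Lemma sumC_swap_splits {B} (F : list A -> A -> list A -> B -> Cx) l1 (l2 : list B) :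
  sumC (splits l1) (fun u => match u with (p, y, s) => sumC l2 (fun v => F p y s v) end) =
  sumC l2 (fun v => sumC (splits l1) (fun u => match u with (p, y, s) => F p y s v end)).
Proof. rewrite <- sumC_swap. apply sumC_ext. intros [[p y] s] _. reflexivity. Qed.

End Splits.

Lemma DXw_splits (w : word) :
  DXw w = map (fun u => match u with (p, x, s) => (p, s, x) end) (splits w).
Proof. unfold DXw. rewrite <- (splits_seq w []), map_map. reflexivity. Qed.

Section Algebra.
Variable P : NCPS.
Implicit Types x y z : P.

Lemma aadd0l x : aadd azero x = x.
Proof. rewrite ax_addC. apply ax_add0. Qed.

Lemma aopp_unique x y : aadd x y = azero -> y = aopp x.
Proof.
  intros H. rewrite <- (ax_add0 P y), <- (ax_addN P x), ax_addA, (ax_addC P y x), H. apply aadd0l.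
Qed.

Lemma asmul0l x : asmul C0 x = azero.
Proof.
  set (y := asmul C0 x).
  assert (E : y = aadd y y).
  { unfold y. rewrite <- ax_smulDl. f_equal. apply Cx_ext; simpl; ring. }
  transitivity (aadd (aadd y y) (aopp y)).
  - rewrite <- ax_addA, ax_addN, ax_add0; reflexivity.
  - rewrite <- E; apply ax_addN.
Qed.

Lemma aopp_asmul x : aopp x = asmul (Copp C1) x.
Proof.
  symmetry. apply aopp_unique. rewrite <- (ax_smul1 P x) at 1. rewrite <- ax_smulDl.
  replace (Cadd C1 (Copp C1)) with C0 by ring. apply asmul0l.
Qed.

Lemma asmul0r a : asmul a (@azero P) = azero.
Proof.
  rewrite <- (asmul0l azero) at 1. rewrite ax_smulA.
  replace (Cmul a C0) with C0 by ring. apply asmul0l.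
Qed.

Lemma amul0r x : amul x azero = azero.
Proof. rewrite <- (asmul0l azero) at 1. rewrite <- ax_smulMr. apply asmul0l. Qed.
Lemma amul0l x : amul azero x = azero.
Proof. rewrite <- (asmul0l azero) at 1. rewrite <- ax_smulMl. apply asmul0l. Qed.

Lemma amul_asmul a b x y : amul (asmul a x) (asmul b y) = asmul (Cmul a b) (amul x y).
Proof. rewrite <- ax_smulMl, <- ax_smulMr, ax_smulA. reflexivity. Qed.

Lemma phi_azero : phi (@azero P) = C0.
Proof. rewrite <- (asmul0l azero) at 1. rewrite ax_phiZ. ring. Qed.

Lemma astar_azero : astar (@azero P) = azero.
Proof.
  rewrite <- (asmul0l azero) at 1. rewrite ax_starZ.
  replace (Cconj C0) with C0 by (apply Cx_ext; simpl; ring). apply asmul0l.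
Qed.

Lemma astar_aone : astar (@aone P) = aone.
Proof.
  assert (E : @aone P = amul (astar aone) (astar (astar aone))).
  { rewrite <- ax_starM, ax_mul1r, ax_starK. reflexivity. }
  symmetry. rewrite E at 1. rewrite ax_starK, ax_mul1r. reflexivity.
Qed.

Lemma asum_app (l1 l2 : list P) : asum P (l1 ++ l2) = aadd (asum P l1) (asum P l2).
Proof. induction l1; simpl. now rewrite aadd0l. rewrite IHl1, ax_addA. reflexivity. Qed.

Lemma asum_map_flat_map {A B} (f : B -> P) (g : A -> list B) l :
  asum P (map f (flat_map g l)) = asum P (map (fun a => asum P (map f (g a))) l).
Proof. induction l; simpl; [reflexivity|]. rewrite map_app, asum_app, IHl. reflexivity. Qed.

Lemma phi_asum_map {A} (f : A -> P) l : phi (asum P (map f l)) = sumC l (fun a => phi (f a)).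
Proof. induction l; simpl. apply phi_azero. rewrite ax_phiD, IHl. reflexivity. Qed.

Lemma amul_asum_l (l : list P) y : amul (asum P l) y = asum P (map (fun x => amul x y) l).
Proof. induction l; simpl. apply amul0l. rewrite ax_mulDl, IHl. reflexivity. Qed.
Lemma amul_asum_r (l : list P) y : amul y (asum P l) = asum P (map (fun x => amul y x) l).
Proof. induction l; simpl. apply amul0r. rewrite ax_mulDr, IHl. reflexivity. Qed.
Lemma asmul_asum a (l : list P) : asmul a (asum P l) = asum P (map (asmul a) l).
Proof. induction l; simpl. apply asmul0r. rewrite ax_smulDr, IHl. reflexivity. Qed.
Lemma astar_asum (l : list P) : astar (asum P l) = asum P (map astar l).
Proof. induction l; simpl. apply astar_azero. rewrite ax_starD, IHl. reflexivity. Qed.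

Lemma aprod_app (l1 l2 : list P) : aprod P (l1 ++ l2) = amul (aprod P l1) (aprod P l2).
Proof. induction l1; simpl. now rewrite ax_mul1l. rewrite IHl1, ax_mulA. reflexivity. Qed.

Lemma astar_aprod (l : list P) : astar (aprod P l) = aprod P (rev (map astar l)).
Proof.
  induction l; simpl. apply astar_aone. rewrite ax_starM, IHl, aprod_app. simpl. now rewrite ax_mul1r.
Qed.

(* Positivity of [phi] on [(1 + x)^* (1 + x)] and on [(1 + i x)^* (1 + i x)]. *)
Lemma phi_astar x : phi (astar x) = Cconj (phi x).
Proof.
  destruct (ax_phi_pos P x) as [Hx _].
  assert (H1 : Im (phi x) + Im (phi (astar x)) = 0).
  { destruct (ax_phi_pos P (aadd aone x)) as [H _].
    rewrite ax_starD, astar_aone, ax_mulDl, !ax_mulDr, !ax_phiD, !ax_mul1l, !ax_mul1r, ax_phi1 in H.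
    simpl in H. lra. }
  assert (H2 : Re (phi x) - Re (phi (astar x)) = 0).
  { destruct (ax_phi_pos P (aadd aone (asmul (mkC 0 1) x))) as [H _].
    rewrite ax_starD, astar_aone, ax_starZ, ax_mulDl, !ax_mulDr, !ax_phiD, !ax_mul1l, !ax_mul1r,
      ax_phi1, <- ax_smulMl, <- ax_smulMr, ax_smulA, !ax_phiZ in H.
    simpl in H. lra. }
  apply Cx_ext; simpl; lra.
Qed.

Lemma phi_square_real x :
  phi (amul x (astar x)) = RC (Re (phi (amul x (astar x)))) /\ 0 <= Re (phi (amul x (astar x))).
Proof.
  rewrite ax_phiT. destruct (ax_phi_pos P x) as [H1 H2]. split; auto.
  apply Cx_ext; simpl; auto.
Qed.

Lemma phi_add_smul_astar (a a' a1 : P) (s s' : Cx) :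
  phi (amul (aadd a (asmul s a1)) (astar (aadd a' (asmul s' a1)))) =
  Cadd (Cadd (phi (amul a (astar a'))) (Cmul (Cconj s') (phi (amul a (astar a1)))))
       (Cadd (Cmul s (phi (amul a1 (astar a'))))
             (Cmul (Cmul s (Cconj s')) (phi (amul a1 (astar a1))))).
Proof.
  rewrite ax_starD, ax_starZ, ax_mulDl, !ax_mulDr, !ax_phiD.
  rewrite <- ax_smulMr, <- ax_smulMl, <- ax_smulMl, <- ax_smulMr, ax_smulA, !ax_phiZ. ring.
Qed.

End Algebra.

(** * The Schur product theorem *)

Section Schur.
Variable P : NCPS.
Variable I : Type.

Definition quad_form (K : I -> I -> Cx) (L : list (Cx * I)) : Cx :=
  sumC L (fun u => sumC L (fun v => Cmul (Cmul (fst u) (Cconj (fst v))) (K (snd u) (snd v)))).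

Definition psd (K : I -> I -> Cx) : Prop := forall L, 0 <= Re (quad_form K L).

Lemma psd_one : psd (fun _ _ => C1).
Proof.
  intros L. unfold quad_form.
  transitivity (Re (Cmul (sumC L fst) (Cconj (sumC L fst)))).
  - destruct (sumC L fst) as [x y]. simpl. nra.
  - right. f_equal. rewrite Cconj_sumC, <- sumC_mulr. apply sumC_ext; intros u _.
    rewrite <- sumC_mull. apply sumC_ext; intros v _. ring.
Qed.

Definition schur_form (K : I -> I -> Cx) (L : list (Cx * I * P)) : Cx :=
  sumC L (fun u => sumC L (fun v =>
    Cmul (Cmul (Cmul (fst (fst u)) (Cconj (fst (fst v)))) (K (snd (fst u)) (snd (fst v))))
         (phi (amul (snd u) (astar (snd v)))))).

Lemma schur_form_cons_zero K w x L : schur_form K ((w, x, azero) :: L) = schur_form K L.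
Proof.
  unfold schur_form. rewrite sumC_cons. simpl fst. simpl snd. rewrite sumC_cons, amul0l, phi_azero.
  rewrite (sumC_ext _ (fun _ => C0) L) by (intros v _; rewrite amul0l, phi_azero; ring).
  rewrite sumC_zero.
  rewrite (sumC_ext _ (fun u => Cadd C0 (sumC L (fun v =>
     Cmul (Cmul (Cmul (fst (fst u)) (Cconj (fst (fst v)))) (K (snd (fst u)) (snd (fst v))))
          (phi (amul (snd u) (astar (snd v))))))) L).
  2:{ intros u _. rewrite sumC_cons. simpl fst. simpl snd.
      rewrite astar_azero, amul0r, phi_azero. f_equal. ring. }
  rewrite sumC_add, sumC_zero. ring.
Qed.

(* Induction on the length of [L]: replacing every algebra element [a] by its
   [phi]-orthogonal projection [g a = a - beta a a1] away from the head [a1]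
   splits the form into one whose head entry is [0] and [r] times a quadratic
   form of [K], where [r = phi(a1 a1^* )]. *)
Lemma schur_form_nonneg K : psd K -> forall n L, length L = n -> 0 <= Re (schur_form K L).
Proof.
  intros HK n. induction n as [|n IH]; intros L HL.
  - destruct L; [|discriminate]. unfold schur_form. simpl. lra.
  - destruct L as [|[[w1 x1] a1] L]; [discriminate|]. simpl in HL. injection HL as HL.
    destruct (phi_square_real P a1) as [HN HN0].
    set (r := Re (phi (amul a1 (astar a1)))) in *.
    destruct (Req_dec r 0) as [Hr|Hr].
    + assert (a1 = azero).
      { apply ax_phi_faithful. rewrite <- ax_phiT, HN, Hr. apply Cx_ext; reflexivity. }
      subst a1. rewrite schur_form_cons_zero. apply IH; auto.
    + set (beta := fun a : P => Cmul (RC (/ r)) (phi (amul a (astar a1)))).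
      set (g := fun a : P => aadd a (asmul (Copp (beta a)) a1)).
      assert (Hb : forall a, Cmul (beta a) (RC r) = phi (amul a (astar a1))).
      { intros a. unfold beta. apply Cx_ext; simpl; field; auto. }
      assert (Hb' : forall a, Cmul (Cconj (beta a)) (RC r) = phi (amul a1 (astar a))).
      { intros a. rewrite <- (ax_starK P a1) at 1.
        rewrite <- ax_starM, phi_astar, <- Hb, Cconj_mul. f_equal. apply Cx_ext; simpl; ring. }
      assert (Hdec : forall a a', phi (amul a (astar a')) =
                Cadd (phi (amul (g a) (astar (g a'))))
                     (Cmul (Cmul (beta a) (Cconj (beta a'))) (RC r))).
      { intros a a'. unfold g. rewrite phi_add_smul_astar, HN, <- Hb, <- Hb', !Cconj_opp. ring. }
      assert (Hg1 : g a1 = azero).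
      { assert (Hb1 : beta a1 = C1) by (unfold beta; rewrite HN; apply Cx_ext; simpl; field; auto).
        unfold g. rewrite Hb1, <- aopp_asmul, ax_addN. reflexivity. }
      set (L0 := (w1, x1, a1) :: L).
      assert (Hsplit : schur_form K L0 = Cadd (schur_form K (map (fun u => (fst u, g (snd u))) L0))
         (Cmul (RC r) (quad_form K
            (map (fun u => (Cmul (fst (fst u)) (beta (snd u)), snd (fst u))) L0)))).
      { unfold schur_form, quad_form. rewrite !sumC_map, <- sumC_mull, <- sumC_add.
        apply sumC_ext; intros u _.
        rewrite !sumC_map, <- sumC_mull, <- sumC_add. apply sumC_ext; intros v _. simpl.
        rewrite Hdec, Cconj_mul. ring. }
      rewrite Hsplit. change (Re (Cadd ?a ?b)) with (Re a + Re b). apply Rplus_le_le_0_compat.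
      * unfold L0. simpl map. rewrite Hg1, schur_form_cons_zero.
        apply IH. rewrite length_map; auto.
      * set (q := quad_form K _). assert (Hq : 0 <= Re q) by apply HK.
        change (Re (Cmul (RC r) q)) with (r * Re q - 0 * Im q). nra.
Qed.

Lemma schur_product_psd K (f : I -> P) :
  psd K -> psd (fun x y => Cmul (K x y) (phi (amul (f x) (astar (f y))))).
Proof.
  intros HK L.
  pose proof (schur_form_nonneg K HK _ (map (fun u => (fst u, snd u, f (snd u))) L) eq_refl) as H.
  unfold schur_form in H. rewrite !sumC_map in H. unfold quad_form.
  erewrite sumC_ext; [exact H|]. intros u _. simpl. rewrite sumC_map. apply sumC_ext; intros v _.
  simpl. ring.
Qed.

End Schur.

(** * Sums over non-crossing pairings *)

Lemma Nat_even_false_iff n : Nat.even n = false <-> exists m, n = (2 * m + 1)%nat.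
Proof.
  change (exists m, n = (2 * m + 1)%nat) with (Nat.Odd n).
  rewrite <- Nat.odd_spec, <- Nat.negb_even. destruct (Nat.even n); split; easy.
Qed.

Lemma flat_map_nil {A B} (f : A -> list B) l : (forall x, In x l -> f x = []) -> flat_map f l = [].
Proof. induction l; simpl; intros H; auto. rewrite H by auto. apply IHl; auto. Qed.

Lemma flat_map_ext_in {A B} (f g : A -> list B) l :
  (forall x, In x l -> f x = g x) -> flat_map f l = flat_map g l.
Proof. induction l; simpl; intros H; auto. rewrite H by auto. f_equal. apply IHl; auto. Qed.

Lemma ncp_odd f l : Nat.even (length l) = false -> ncp f l = [].
Proof.
  revert l; induction f as [|f IH]; intros l H; destruct l as [|x r]; try reflexivity;
    try (simpl in H; discriminate).
  - cbn [ncp]. apply flat_map_nil. intros k Hk. apply in_seq in Hk.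
    destruct (Nat.even k) eqn:Ek; [|reflexivity].
    destruct (nth_error r k) as [y|]; [|reflexivity].
    apply flat_map_nil. intros p1 _. rewrite IH; [reflexivity|].
    rewrite length_skipn. simpl length in H.
    apply Nat_even_false_iff in H. apply Nat.even_spec in Ek. destruct H as [a Ha], Ek as [b Hb].
    apply Nat_even_false_iff. exists (a - b - 1)%nat. lia.
Qed.

Lemma ncp_fuel f1 f2 l : (length l <= f1)%nat -> (length l <= f2)%nat -> ncp f1 l = ncp f2 l.
Proof.
  revert f2 l; induction f1 as [|f1 IH]; intros f2 l H1 H2; destruct l as [|x r];
    try (destruct f2; reflexivity).
  - simpl in H1; lia.
  - destruct f2 as [|f2]; [simpl in H2; lia|]. cbn [ncp]. simpl length in *.
    apply flat_map_ext_in. intros k Hk. apply in_seq in Hk.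
    destruct (Nat.even k); [|reflexivity]. destruct (nth_error r k) as [y|]; [|reflexivity].
    rewrite (IH f2 (firstn k r)). apply flat_map_ext_in. intros p1 _.
    rewrite (IH f2 (skipn (S k) r)). reflexivity.
    all: try rewrite length_skipn; try rewrite length_firstn; lia.
Qed.

Lemma cprod_app l1 l2 : cprod (l1 ++ l2) = Cmul (cprod l1) (cprod l2).
Proof. induction l1; simpl; [ring| rewrite IHl1; ring]. Qed.

Section NCPairings.
Variable K : R -> R -> Cx.

Definition nc_pairing_sum (v : nat -> R) (f : nat) (l : list nat) : Cx :=
  csum (map (fun pi => cprod (map (fun pq => K (v (fst pq)) (v (snd pq))) pi)) (ncp f l)).

Lemma nc_pairing_sum_cons v f x r :
  nc_pairing_sum v (S f) (x :: r) = sumC (seq 0 (length r)) (fun k =>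
     if Nat.even k then match nth_error r k with
        | Some y => Cmul (K (v x) (v y))
                     (Cmul (nc_pairing_sum v f (firstn k r)) (nc_pairing_sum v f (skipn (S k) r)))
        | None => C0 end else C0).
Proof.
  unfold nc_pairing_sum. cbn [ncp]. rewrite csum_map_sumC, sumC_flat_map. apply sumC_ext. intros k _.
  destruct (Nat.even k); [|reflexivity]. destruct (nth_error r k) as [y|]; [|reflexivity].
  rewrite sumC_flat_map, !csum_map_sumC, <- sumC_mulr, <- sumC_mull. apply sumC_ext; intros p1 _.
  rewrite sumC_map, <- !sumC_mull. apply sumC_ext; intros p2 _.
  simpl. rewrite map_app, cprod_app. ring.
Qed.

Lemma nc_pairing_sum_map f : forall v v' l l',
  map v l = map v' l' -> nc_pairing_sum v f l = nc_pairing_sum v' f l'.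
Proof.
  induction f as [|f IH]; intros v v' l l' E.
  - destruct l, l'; try discriminate; reflexivity.
  - destruct l as [|x r], l' as [|x' r']; try discriminate; [reflexivity|].
    simpl in E. injection E as E1 E2.
    rewrite !nc_pairing_sum_cons.
    assert (Hl : length r = length r') by (rewrite <- (length_map v), E2; apply length_map).
    rewrite Hl. apply sumC_ext. intros k Hk. apply in_seq in Hk.
    destruct (Nat.even k); [|reflexivity].
    assert (F1 : map v (firstn k r) = map v' (firstn k r'))
      by (rewrite <- !firstn_map, E2; reflexivity).
    assert (F2 : map v (skipn (S k) r) = map v' (skipn (S k) r'))
      by (rewrite <- !skipn_map, E2; reflexivity).
    assert (F3 : option_map v (nth_error r k) = option_map v' (nth_error r' k))
      by (rewrite <- !nth_error_map, E2; reflexivity).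
    destruct (nth_error r k) as [y|], (nth_error r' k) as [y'|];
      simpl in F3; try discriminate; [|reflexivity].
    injection F3 as F3. rewrite E1, F3, (IH _ _ _ _ F1), (IH _ _ _ _ F2). reflexivity.
Qed.

(* By [semicircular], [wick Kov ts] is the moment [phi (X_t1 ... X_tr)]. *)
Definition wick (ts : list R) : Cx :=
  nc_pairing_sum (fun i => nth i ts 0) (length ts) (seq 0 (length ts)).

Lemma map_nth_seq (ts : list R) d : map (fun i => nth i ts d) (seq 0 (length ts)) = ts.
Proof.
  induction ts as [|t ts IH]; [reflexivity|]. simpl length. simpl seq. rewrite <- seq_shift.
  simpl. f_equal. rewrite map_map. exact IH.
Qed.

Lemma nc_pairing_sum_wick v f l : (length l <= f)%nat -> nc_pairing_sum v f l = wick (map v l).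
Proof.
  intros H. unfold wick. rewrite length_map.
  unfold nc_pairing_sum at 1. rewrite (ncp_fuel f (length l) l H (le_n _)).
  fold (nc_pairing_sum v (length l) l).
  apply nc_pairing_sum_map. rewrite <- (length_map v l), map_nth_seq. reflexivity.
Qed.

Lemma wick_odd ts : Nat.even (length ts) = false -> wick ts = C0.
Proof.
  intros H. unfold wick, nc_pairing_sum. rewrite ncp_odd; [reflexivity|]. now rewrite length_seq.
Qed.

Lemma wick_cons t ts : wick (t :: ts) =
  sumC (splits ts) (fun u => match u with (p, x, s) => Cmul (K t x) (Cmul (wick p) (wick s)) end).
Proof.
  unfold wick at 1. simpl length. simpl seq. rewrite nc_pairing_sum_cons, length_seq.
  rewrite <- (splits_seq ts 0), sumC_map. apply sumC_ext. intros k Hk. apply in_seq in Hk.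
  rewrite nth_error_seq. replace (k <? length ts)%nat with true by (symmetry; apply Nat.ltb_lt; lia).
  set (v := fun i => nth i (t :: ts) 0).
  assert (Ev : map v (seq 1 (length ts)) = ts).
  { unfold v. rewrite <- seq_shift, map_map. simpl. apply map_nth_seq. }
  rewrite !nc_pairing_sum_wick, <- firstn_map, <- skipn_map, Ev.
  2,3: first [rewrite length_skipn | rewrite length_firstn]; rewrite length_seq; lia.
  unfold v. simpl nth.
  destruct (Nat.even k) eqn:Ek; [reflexivity|].
  rewrite (wick_odd (firstn k ts)). ring.
  rewrite length_firstn, Nat.min_l by lia. exact Ek.
Qed.

End NCPairings.

(** * Moments of words in the semicircular process *)

Section Divergence.
Variable P : NCPS.
Variable T : R.
Variable X : R -> P.
Hypothesis HS : semicircular P T X.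

Local Notation Kov := (Kov P X).
Local Notation Xh := (Xh P X).
Local Notation ipH := (ipH P X).
Local Notation ev := (ev P X).
Local Notation delta_term := (delta_term P X).
Local Notation deltaX := (deltaX P X).
Local Notation normU2 := (normU2 P X).
Local Notation normV2 := (normV2 P X).
Local Notation ok := (step_ok T).

Definition in_horizon (t : R) : Prop := 0 <= t <= T.
Definition moment (ts : list R) : Cx := phi (aprod P (map X ts)).

Lemma moment_wick ts : Forall in_horizon ts -> moment ts = wick Kov ts.
Proof.
  intros H. destruct HS as [_ Hmom]. unfold moment. rewrite (Hmom ts H).
  destruct (Nat.even (length ts)) eqn:E; [reflexivity|]. symmetry. apply wick_odd. exact E.
Qed.

Lemma moment_cons t ts : Forall in_horizon (t :: ts) ->
  moment (t :: ts) = sumC (splits ts) (fun u => match u with (p, x, s) =>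
                       Cmul (Kov t x) (Cmul (moment p) (moment s)) end).
Proof.
  intros H. rewrite moment_wick, wick_cons by auto. apply sumC_ext. intros [[p x] s] Hin.
  apply in_splits in Hin. subst ts. inversion H; subst.
  rewrite Forall_app in H3. destruct H3 as [H3 H4]. inversion H4; subst.
  rewrite !moment_wick by auto. reflexivity.
Qed.

(* [X(h)] expanded in point evaluations: [al 1_[a,b)] contributes [al X_b - al X_a]. *)
Definition step_terms (h : step) : list (Cx * R) :=
  flat_map (fun a => match a with (al, a0, b) => [(RC al, b); (Copp (RC al), a0)] end) h.

Fixpoint word_terms (w : word) : list (Cx * list R) :=
  match w with
  | [] => [(C1, [])]
  | h :: w' => flat_map (fun c => map (fun c' => (Cmul (fst c) (fst c'), snd c :: snd c'))
                                      (word_terms w')) (step_terms h)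
  end.

Lemma Xh_step_terms h :
  Xh h = asum P (map (fun c => asmul (fst c) (X (snd c))) (step_terms h)).
Proof.
  induction h as [|[[al a0] b] h IH]; [reflexivity|].
  unfold Defs.Xh in *. simpl. rewrite IH. unfold asub.
  rewrite ax_smulDr, aopp_asmul, ax_smulA, <- ax_addA. do 3 f_equal. ring.
Qed.

Lemma ev_word_terms w :
  ev w = asum P (map (fun c => asmul (fst c) (aprod P (map X (snd c)))) (word_terms w)).
Proof.
  induction w as [|h w IH]; unfold Defs.ev in *; simpl.
  - rewrite ax_smul1, ax_add0. reflexivity.
  - rewrite IH, Xh_step_terms, amul_asum_l, asum_map_flat_map, map_map. f_equal.
    apply map_ext. intros c.
    rewrite amul_asum_r, !map_map. f_equal. apply map_ext. intros c'. simpl. apply amul_asmul.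
Qed.

Definition phi_word (w : word) : Cx := phi (ev w).

Lemma phi_word_terms w :
  phi_word w = sumC (word_terms w) (fun c => Cmul (fst c) (moment (snd c))).
Proof.
  unfold phi_word. rewrite ev_word_terms, phi_asum_map.
  apply sumC_ext. intros; rewrite ax_phiZ. reflexivity.
Qed.

Lemma step_terms_in_horizon h : ok h -> forall c, In c (step_terms h) -> in_horizon (snd c).
Proof.
  induction h as [|[[al a0] b] h IH]; intros H c Hc; [destruct Hc|].
  inversion H; subst. destruct H2 as (G1 & G2 & G3).
  simpl in Hc. destruct Hc as [<-|[<-|Hc]]; unfold in_horizon; simpl; try lra. apply IH; auto.
Qed.

Lemma word_terms_in_horizon w :
  Forall ok w -> forall c, In c (word_terms w) -> Forall in_horizon (snd c).
Proof.
  induction w as [|h w IH]; intros H c Hc.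
  - destruct Hc as [<-|[]]. constructor.
  - inversion H; subst. simpl in Hc. apply in_flat_map in Hc. destruct Hc as [c1 [K1 K2]].
    apply in_map_iff in K2. destruct K2 as [c2 [<- K3]]. simpl. constructor.
    + apply (step_terms_in_horizon h); auto.
    + apply IH; auto.
Qed.

Lemma sumC_step_terms (F : Cx * R -> Cx) h :
  sumC (step_terms h) F =
  sumC h (fun a => match a with (al, a0, b) => Cadd (F (RC al, b)) (F (Copp (RC al), a0)) end).
Proof.
  unfold step_terms. rewrite sumC_flat_map. apply sumC_ext. intros [[al a0] b] _. simpl.
  rewrite !sumC_cons, sumC_nil. ring.
Qed.

Lemma ipH_step_terms h k : ipH h k =
  sumC (step_terms h) (fun c => sumC (step_terms k) (fun c2 =>
    Cmul (Cmul (fst c) (fst c2)) (Kov (snd c) (snd c2)))).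
Proof.
  unfold Defs.ipH. rewrite csum_sumC, sumC_flat_map, sumC_step_terms.
  apply sumC_ext. intros [[al a0] b] _.
  rewrite sumC_map, !sumC_step_terms, <- sumC_add. apply sumC_ext. intros [[be c0] d] _. simpl.
  apply Cx_ext; simpl; ring.
Qed.

(* Choosing a point of an expanded monomial is choosing a letter of the word. *)
Lemma sumC_word_terms_splits (w : word) : forall (G : list R -> R -> list R -> Cx),
  sumC (word_terms w) (fun c => Cmul (fst c)
     (sumC (splits (snd c)) (fun u => match u with (p, x, s) => G p x s end)))
  = sumC (splits w) (fun u => match u with (p, h, s) =>
      sumC (word_terms p) (fun c1 => sumC (step_terms h) (fun c2 => sumC (word_terms s) (fun c3 =>
        Cmul (Cmul (fst c1) (Cmul (fst c2) (fst c3))) (G (snd c1) (snd c2) (snd c3))))) end).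
Proof.
  induction w as [|h w IH]; intros G.
  - cbn [word_terms splits]. rewrite sumC_cons, !sumC_nil. simpl. rewrite sumC_nil. ring.
  - simpl word_terms. simpl splits. rewrite sumC_flat_map, sumC_cons, sumC_map.
    transitivity (sumC (step_terms h) (fun c0 => Cadd
       (sumC (word_terms w) (fun c' => Cmul (Cmul (fst c0) (fst c')) (G [] (snd c0) (snd c'))))
       (Cmul (fst c0) (sumC (word_terms w) (fun c' => Cmul (fst c')
          (sumC (splits (snd c')) (fun u => match u with (p, x, s) => G (snd c0 :: p) x s end))))))).
    { apply sumC_ext; intros c0 _. rewrite sumC_map, <- sumC_mull, <- sumC_add.
      apply sumC_ext; intros c' _. simpl. rewrite sumC_cons, sumC_map.
      rewrite (sumC_ext _ (fun u => match u with (p, x, s) => G (snd c0 :: p) x s end))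
        by (intros [[p x] s] _; reflexivity).
      ring. }
    rewrite sumC_add. f_equal.
    + simpl. rewrite sumC_cons, sumC_nil, Cadd_C0_r.
      apply sumC_ext; intros c0 _. apply sumC_ext; intros c' _. simpl. ring.
    + rewrite (sumC_ext _ (fun c0 => sumC (splits w) (fun u =>
        Cmul (fst c0) (match u with (p, h0, s) =>
        sumC (word_terms p) (fun c1 => sumC (step_terms h0) (fun c2 => sumC (word_terms s) (fun c3 =>
          Cmul (Cmul (fst c1) (Cmul (fst c2) (fst c3))) (G (snd c0 :: snd c1) (snd c2) (snd c3)))))
        end)))).
      2:{ intros c0 _. rewrite sumC_mull, (IH (fun p x s => G (snd c0 :: p) x s)). reflexivity. }
      rewrite sumC_swap. apply sumC_ext. intros [[p h0] s] _. simpl.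
      rewrite sumC_flat_map. apply sumC_ext; intros c0 _.
      rewrite sumC_map, <- sumC_mull. apply sumC_ext; intros c1 _.
      rewrite <- sumC_mull. apply sumC_ext; intros c2 _.
      rewrite <- sumC_mull. apply sumC_ext; intros c3 _. simpl. ring.
Qed.

Lemma phi_word_cons h w : ok h -> Forall ok w ->
  phi_word (h :: w) = sumC (splits w) (fun u => match u with (p, x, s) =>
     Cmul (ipH h x) (Cmul (phi_word p) (phi_word s)) end).
Proof.
  intros Hh Hw.
  rewrite phi_word_terms. simpl word_terms. rewrite sumC_flat_map.
  transitivity (sumC (step_terms h) (fun c0 => Cmul (fst c0) (sumC (word_terms w) (fun c' =>
     Cmul (fst c') (sumC (splits (snd c')) (fun u => match u with (p, x, s) =>
        (fun p x s => Cmul (Kov (snd c0) x) (Cmul (moment p) (moment s))) p x s end)))))).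
  { apply sumC_ext; intros c0 H0. rewrite sumC_map, <- sumC_mull. apply sumC_ext; intros c' H'.
    simpl. rewrite moment_cons; [ring|].
    constructor; [eapply step_terms_in_horizon; eauto | eapply word_terms_in_horizon; eauto]. }
  transitivity (sumC (step_terms h) (fun c0 => sumC (splits w) (fun u =>
    Cmul (fst c0) (match u with (p, h0, s) =>
      sumC (word_terms p) (fun c1 => sumC (step_terms h0) (fun c2 => sumC (word_terms s) (fun c3 =>
        Cmul (Cmul (fst c1) (Cmul (fst c2) (fst c3)))
          (Cmul (Kov (snd c0) (snd c2)) (Cmul (moment (snd c1)) (moment (snd c3))))))) end)))).
  { apply sumC_ext; intros c0 _. rewrite sumC_mull. f_equal.
    apply (sumC_word_terms_splits w
             (fun p x s => Cmul (Kov (snd c0) x) (Cmul (moment p) (moment s)))). }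
  rewrite sumC_swap. apply sumC_ext. intros [[p x] s] _.
  rewrite ipH_step_terms, !phi_word_terms, <- sumC_mulr. apply sumC_ext; intros c0 _.
  transitivity (sumC (word_terms p) (fun c1 => sumC (step_terms x) (fun c2 =>
     sumC (word_terms s) (fun c3 =>
     Cmul (fst c0) (Cmul (Cmul (fst c1) (Cmul (fst c2) (fst c3)))
                (Cmul (Kov (snd c0) (snd c2)) (Cmul (moment (snd c1)) (moment (snd c3))))))))).
  { rewrite <- sumC_mull. apply sumC_ext; intros c1 _. rewrite <- sumC_mull.
    apply sumC_ext; intros c2 _. rewrite <- sumC_mull. reflexivity. }
  rewrite sumC_swap, <- sumC_mulr. apply sumC_ext; intros c2 _.
  rewrite <- (sumC_mulr _ _ (word_terms p)), <- (sumC_mull _ _ (word_terms p)).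
  apply sumC_ext; intros c1 _.
  rewrite <- (sumC_mull _ _ (word_terms s)), <- (sumC_mull _ _ (word_terms s)).
  apply sumC_ext; intros c3 _. ring.
Qed.

Lemma ev_app w1 w2 : ev (w1 ++ w2) = amul (ev w1) (ev w2).
Proof. unfold Defs.ev. rewrite map_app, aprod_app. reflexivity. Qed.

Lemma phi_word_rot w1 w2 : phi_word (w1 ++ w2) = phi_word (w2 ++ w1).
Proof. unfold phi_word. rewrite !ev_app. apply ax_phiT. Qed.

Lemma phi_word_nil : phi_word [] = C1.
Proof. unfold phi_word, Defs.ev. simpl. apply ax_phi1. Qed.

Lemma Xh_selfadjoint h : ok h -> astar (Xh h) = Xh h.
Proof.
  intros Hh. destruct HS as [Hsa _]. induction h as [|[[al a0] b] h IH]; simpl.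
  - apply astar_azero.
  - inversion Hh; subst. destruct H1 as (G1 & G2 & G3).
    unfold Defs.Xh in *. simpl. rewrite ax_starD, IH by auto. f_equal.
    unfold asub. rewrite ax_starZ, ax_starD, aopp_asmul, ax_starZ, !Hsa by lra.
    f_equal; [apply Cx_ext; simpl; ring|]. do 2 f_equal. apply Cx_ext; simpl; ring.
Qed.

Lemma astar_ev w : Forall ok w -> astar (ev w) = ev (rev w).
Proof.
  intros Hw. unfold Defs.ev. rewrite astar_aprod, map_map, <- map_rev. f_equal.
  apply map_ext_in. intros h Hin. apply Xh_selfadjoint.
  rewrite Forall_forall in Hw. apply Hw, in_rev, Hin.
Qed.

Lemma phi_ev_astar a a' : Forall ok a' ->
  phi (amul (ev a) (astar (ev a'))) = phi_word (a ++ rev a').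
Proof. intros H. rewrite astar_ev, <- ev_app; auto. Qed.

Lemma Cconj_phi_word w : Forall ok w -> Cconj (phi_word w) = phi_word (rev w).
Proof. intros Hw. unfold phi_word. rewrite <- phi_astar, astar_ev; auto. Qed.

Lemma ipH_phi_word h k : ok h -> ok k -> ipH h k = phi_word [h; k].
Proof.
  intros Hh Hk. rewrite phi_word_cons; auto. simpl. rewrite sumC_cons, sumC_nil, phi_word_nil. ring.
Qed.

Lemma ipH_sym h k : ipH h k = ipH k h.
Proof.
  rewrite !ipH_step_terms, sumC_swap. apply sumC_ext; intros c _. apply sumC_ext; intros c' _.
  unfold Defs.Kov. rewrite ax_phiT. ring.
Qed.

Lemma Cconj_ipH h k : ok h -> ok k -> Cconj (ipH h k) = ipH h k.
Proof.
  intros Hh Hk. rewrite ipH_phi_word, Cconj_phi_word by auto. simpl.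
  rewrite <- ipH_phi_word, ipH_sym, ipH_phi_word; auto.
Qed.

Lemma ipH_phi_Xh h k : ipH h k = phi (amul (Xh h) (Xh k)).
Proof.
  rewrite ipH_step_terms, !Xh_step_terms, amul_asum_l, map_map, phi_asum_map.
  apply sumC_ext; intros c _.
  rewrite amul_asum_r, map_map, phi_asum_map. apply sumC_ext; intros c' _.
  rewrite amul_asmul, ax_phiZ. reflexivity.
Qed.

(** * The divergence as a combination of words *)

Definition ev_comb (L : list (Cx * word)) : P :=
  asum P (map (fun u => asmul (fst u) (ev (snd u))) L).

Lemma ev_comb_app L1 L2 : ev_comb (L1 ++ L2) = aadd (ev_comb L1) (ev_comb L2).
Proof. unfold ev_comb. rewrite map_app, asum_app. reflexivity. Qed.

Definition delta_comb (t : Cx * word * word * step) : list (Cx * word) :=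
  match t with (c, m1, m2, h) =>
    (c, m1 ++ h :: m2) :: map (fun y => match y with (c', a, b, d, k) =>
        (Copp (Cmul (Cmul c' (ipH k h)) (phi_word b)), a ++ d) end) (D1F c m1 m2 ++ D2F c m1 m2)
  end.

Lemma delta_term_comb t : delta_term t = ev_comb (delta_comb t).
Proof.
  destruct t as [[[c m1] m2] h]. unfold Defs.delta_term, delta_comb, ev_comb. simpl map. simpl asum.
  unfold asub. f_equal.
  - rewrite ev_app. unfold Defs.ev. simpl. rewrite ax_mulA. reflexivity.
  - rewrite aopp_asmul, asmul_asum, !map_map. f_equal. apply map_ext. intros [[[[c' a] b] d] k].
    simpl. rewrite ev_app, !ax_smulA. f_equal. unfold phi_word. ring.
Qed.

Lemma deltaX_comb U : deltaX U = ev_comb (flat_map delta_comb U).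
Proof.
  unfold Defs.deltaX. induction U as [|t U IH]; [reflexivity|].
  simpl. rewrite ev_comb_app, IH, delta_term_comb. reflexivity.
Qed.

Lemma delta_comb_ok c m1 m2 h : ok h -> Forall ok m1 -> Forall ok m2 ->
  forall v, In v (delta_comb (c, m1, m2, h)) -> Forall ok (snd v).
Proof.
  intros Hh H1 H2 v Hv. simpl in Hv. destruct Hv as [<-|Hv].
  - simpl. rewrite Forall_app. auto.
  - apply in_map_iff in Hv. destruct Hv as [[[[[c' a] b] d] k] [<- Hin]]. simpl.
    apply in_app_or in Hin. unfold D1F, D2F in Hin. rewrite !DXw_splits, !map_map in Hin.
    destruct Hin as [Hin|Hin]; apply in_map_iff in Hin; destruct Hin as [[[p x] s] [E Hs]];
      injection E as <- <- <- <- <-;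
      destruct (splits_Forall _ _ _ _ _ Hs ltac:(eassumption)) as (G1 & G2 & G3);
      rewrite Forall_app; auto.
Qed.

Lemma phi_ev_comb_astar L1 L2 : Forall (fun u => Forall ok (snd u)) L2 ->
  phi (amul (ev_comb L1) (astar (ev_comb L2))) =
  sumC L1 (fun u => sumC L2 (fun v =>
    Cmul (Cmul (fst u) (Cconj (fst v))) (phi_word (snd u ++ rev (snd v))))).
Proof.
  intros H2. unfold ev_comb. rewrite astar_asum, amul_asum_l, map_map, phi_asum_map.
  apply sumC_ext; intros u _.
  rewrite map_map, amul_asum_r, map_map, phi_asum_map. apply sumC_ext; intros v Hv.
  rewrite ax_starZ, amul_asmul, ax_phiZ, astar_ev, <- ev_app; [reflexivity|].
  rewrite Forall_forall in H2. apply H2; auto.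
Qed.

Definition split_pairing (a b : word) (h : step) (W : word) : Cx :=
  sumC (splits W) (fun u => match u with (p, x, s) =>
    Cmul (ipH h x) (Cmul (phi_word (b ++ p)) (phi_word (s ++ a))) end).

(* The duality between [delta] and [D]: [phi(delta(c (a (x) b) h) W)] pairs
   [h] with one letter of [W].  The Wick expansion of the first term pairs [h]
   with a letter of [b], of [W] or of [a]; the correction terms of the
   divergence cancel the first and the last kind. *)
Lemma sumC_delta_comb_pairing c a b h W : ok h -> Forall ok a -> Forall ok b -> Forall ok W ->
  sumC (delta_comb (c, a, b, h)) (fun u => Cmul (fst u) (phi_word (snd u ++ W))) =
  Cmul c (split_pairing a b h W).
Proof.
  intros Hh Ha Hb HW. unfold split_pairing.
  unfold delta_comb. rewrite sumC_cons, sumC_map, sumC_app. unfold D1F, D2F.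
  rewrite !sumC_map, !DXw_splits, !sumC_map. simpl fst. simpl snd.
  rewrite <- (app_assoc a (h :: b) W), (phi_word_rot a ((h :: b) ++ W)).
  replace (((h :: b) ++ W) ++ a) with (h :: (b ++ W ++ a)) by (simpl; rewrite app_assoc; reflexivity).
  rewrite (phi_word_cons h (b ++ W ++ a)) by (auto; rewrite !Forall_app; auto).
  rewrite (splits_app b (W ++ a)), (splits_app W a), !sumC_app, !sumC_map, sumC_app, !sumC_map.
  match goal with |- Cadd (Cmul c (Cadd ?Sb (Cadd ?SW ?Sa))) (Cadd ?Ca ?Cb) = Cmul c ?R =>
    assert (Ea : Ca = Copp (Cmul c Sa)); [| assert (Eb : Cb = Copp (Cmul c Sb));
      [| assert (EW : SW = R); [| rewrite Ea, Eb, EW; ring]]] end.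
  - rewrite <- sumC_mull, <- sumC_opp. apply sumC_ext; intros [[p x] s] _. simpl.
    rewrite <- (app_assoc p b W), (phi_word_rot p (b ++ W)), <- (app_assoc b W p), (ipH_sym x h).
    ring.
  - rewrite <- sumC_mull, <- sumC_opp. apply sumC_ext; intros [[p x] s] _. simpl.
    rewrite <- (app_assoc a s W), (phi_word_rot a (s ++ W)), <- (app_assoc s W a), (ipH_sym x h).
    ring.
  - apply sumC_ext; intros [[p x] s] _. reflexivity.
Qed.

(** * Gram entries of the divergence *)

Ltac simpl_proj := cbv beta iota zeta delta [fst snd].

Lemma Copp_Cmul_add2_eq k c d s1 s2 t1 t2 :
  Cmul (Cmul k c) s1 = Cmul d t1 -> Cmul (Cmul k c) s2 = Cmul d t2 ->
  Cmul (Copp k) (Cmul c (Cadd s1 s2)) = Copp (Cmul d (Cadd t1 t2)).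
Proof.
  intros H1 H2. transitivity (Copp (Cadd (Cmul (Cmul k c) s1) (Cmul (Cmul k c) s2))); [ring|].
  rewrite H1, H2; ring.
Qed.

Lemma Cmul_add3_eq k q s1 s2 s3 t1 t2 t3 :
  Cmul (Cmul k q) s1 = Cmul C1 t1 -> Cmul (Cmul k q) s2 = Cmul C1 t2 ->
  Cmul (Cmul k q) s3 = Cmul C1 t3 -> Cmul k (Cmul q (Cadd s1 (Cadd s2 s3))) = Cadd (Cadd t1 t2) t3.
Proof.
  intros H1 H2 H3.
  transitivity (Cadd (Cadd (Cmul (Cmul k q) s1) (Cmul (Cmul k q) s2)) (Cmul (Cmul k q) s3)); [ring|].
  rewrite H1, H2, H3; ring.
Qed.

Lemma Cmul_add3_eq_r k q s1 s2 s3 t1 t2 t3 :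
  Cmul (Cmul k q) s1 = Cmul C1 t1 -> Cmul (Cmul k q) s2 = Cmul C1 t2 ->
  Cmul (Cmul k q) s3 = Cmul C1 t3 -> Cmul k (Cmul (Cadd s1 (Cadd s2 s3)) q) = Cadd (Cadd t1 t2) t3.
Proof.
  intros H1 H2 H3.
  transitivity (Cadd (Cadd (Cmul (Cmul k q) s1) (Cmul (Cmul k q) s2)) (Cmul (Cmul k q) s3)); [ring|].
  rewrite H1, H2, H3; ring.
Qed.

Section GramEntry.
Variables (a b A B : word) (h h' : step).
Hypotheses (Hh : ok h) (Hh' : ok h') (Ha : Forall ok a) (Hb : Forall ok b)
  (HA : Forall ok A) (HB : Forall ok B).

(* Expanding [phi (delta((a (x) b) h) delta((A (x) B) h'))] pairs [h] and [h']
   with letters of the four words.  [pair_XY] collects the terms in which [h]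
   is paired inside [X] and [h'] inside [Y] (for [X = Y], [pair_AA] has [h]
   before [h'] and [pair_BB] after); [corr_XY] are the corresponding terms of
   the correction part of the second divergence, which cancel them. *)
Definition ipH_pair y z := Cmul (ipH h y) (ipH h' z).

Definition inner_entry := Cmul (ipH h h') (Cmul (phi_word (b ++ A)) (phi_word (B ++ a))).

Definition cross1_entry :=
  sumC (splits A) (fun u => match u with (p', y, s') =>
  sumC (splits a) (fun u' => match u' with (pa, z, sa) =>
    Cmul (ipH_pair y z) (Cmul (phi_word (b ++ p')) (Cmul (phi_word (B ++ pa)) (phi_word (sa ++ s'))))
  end) end).
Definition cross2_entry :=
  sumC (splits B) (fun u => match u with (pB, y, sB) =>
  sumC (splits b) (fun u' => match u' with (pb, z, sb) =>
    Cmul (ipH_pair y z) (Cmul (phi_word (sB ++ a)) (Cmul (phi_word (pB ++ pb)) (phi_word (sb ++ A))))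
  end) end).

Definition pair_AB :=
  sumC (splits A) (fun u => match u with (p', y, s') =>
  sumC (splits B) (fun u' => match u' with (p2, z, s2) =>
    Cmul (ipH_pair y z) (Cmul (phi_word (b ++ p')) (Cmul (phi_word p2) (phi_word (s2 ++ a ++ s'))))
  end) end).
Definition pair_AA :=
  sumC (splits A) (fun u => match u with (p', y, s') =>
  sumC (splits s') (fun u' => match u' with (p3, z, s3) =>
    Cmul (ipH_pair y z) (Cmul (phi_word (b ++ p')) (Cmul (phi_word (B ++ a ++ p3)) (phi_word s3)))
  end) end).
Definition pair_BB :=
  sumC (splits B) (fun u => match u with (pB, y, sB) =>
  sumC (splits pB) (fun u' => match u' with (p4, z, s4) =>
    Cmul (ipH_pair y z) (Cmul (phi_word (sB ++ a)) (Cmul (phi_word p4) (phi_word (s4 ++ b ++ A))))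
  end) end).
Definition pair_BA :=
  sumC (splits B) (fun u => match u with (pB, y, sB) =>
  sumC (splits A) (fun u' => match u' with (p5, z, s5) =>
    Cmul (ipH_pair y z) (Cmul (phi_word (sB ++ a)) (Cmul (phi_word (pB ++ b ++ p5)) (phi_word s5)))
  end) end).

Definition corr_AA :=
  sumC (splits A) (fun u => match u with (p', y, s') =>
  sumC (splits p') (fun u' => match u' with (pp, x, ss) =>
    Cmul (Cmul (ipH y h') (phi_word s'))
         (Cmul (ipH h x) (Cmul (phi_word (b ++ pp)) (phi_word (ss ++ B ++ a))))
  end) end).
Definition corr_BA :=
  sumC (splits A) (fun u => match u with (p', y, s') =>
  sumC (splits B) (fun u' => match u' with (pB, x, sB) =>
    Cmul (Cmul (ipH y h') (phi_word s'))
         (Cmul (ipH h x) (Cmul (phi_word (b ++ p' ++ pB)) (phi_word (sB ++ a))))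
  end) end).
Definition corr_AB :=
  sumC (splits B) (fun u => match u with (p', y, s') =>
  sumC (splits A) (fun u' => match u' with (pA, x, sA) =>
    Cmul (Cmul (ipH y h') (phi_word p'))
         (Cmul (ipH h x) (Cmul (phi_word (b ++ pA)) (phi_word (sA ++ s' ++ a))))
  end) end).
Definition corr_BB :=
  sumC (splits B) (fun u => match u with (p', y, s') =>
  sumC (splits s') (fun u' => match u' with (pp, x, ss) =>
    Cmul (Cmul (ipH y h') (phi_word p'))
         (Cmul (ipH h x) (Cmul (phi_word (b ++ A ++ pp)) (phi_word (ss ++ a))))
  end) end).

Lemma pair_AB_corr : pair_AB = corr_AB.
Proof.
  unfold pair_AB, corr_AB. etransitivity; [apply sumC_swap_splits|].
  apply sumC_ext; intros [[p2 z] s2] _. apply sumC_ext; intros [[p' y] s'] _.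
  unfold ipH_pair. rewrite (app_assoc s2 a s'), (phi_word_rot (s2 ++ a) s'), (ipH_sym z h'). ring.
Qed.

Lemma pair_AA_corr : pair_AA = corr_AA.
Proof.
  unfold pair_AA, corr_AA.
  rewrite (sumC_splits_nested (fun p y p3 z s3 => Cmul (ipH_pair y z)
     (Cmul (phi_word (b ++ p)) (Cmul (phi_word (B ++ a ++ p3)) (phi_word s3)))) A).
  apply sumC_ext; intros [[p' z] s3] _. apply sumC_ext; intros [[pp x] ss] _.
  unfold ipH_pair. rewrite (app_assoc B a ss), (phi_word_rot (B ++ a) ss), (ipH_sym z h'). ring.
Qed.

Lemma pair_BB_corr : pair_BB = corr_BB.
Proof.
  unfold pair_BB, corr_BB.
  set (F := fun p y p3 z s3 => Cmul (ipH_pair z y)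
     (Cmul (phi_word (s3 ++ a)) (Cmul (phi_word p) (phi_word (p3 ++ b ++ A))))).
  transitivity (sumC (splits B) (fun u => match u with (p', z, s3) =>
    sumC (splits p') (fun u' => match u' with (p, y, p3) => F p y p3 z s3 end) end)).
  { apply sumC_ext; intros [[p' z] s3] _. apply sumC_ext; intros [[p y] p3] _. reflexivity. }
  rewrite <- (sumC_splits_nested F B).
  apply sumC_ext; intros [[p' y] s'] _. apply sumC_ext; intros [[pp x] ss] _.
  unfold F, ipH_pair. rewrite (phi_word_rot pp (b ++ A)), <- (app_assoc b A pp), (ipH_sym y h'). ring.
Qed.

Lemma pair_BA_corr : pair_BA = corr_BA.
Proof.
  unfold pair_BA, corr_BA. etransitivity; [apply sumC_swap_splits|].
  apply sumC_ext; intros [[p5 z] s5] _. apply sumC_ext; intros [[pB y] sB] _.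
  unfold ipH_pair. rewrite (phi_word_rot pB (b ++ p5)), <- (app_assoc b p5 pB), (ipH_sym z h'). ring.
Qed.

Lemma split_pairing_delta_word : split_pairing a b h (A ++ h' :: B) =
  Cadd (Cadd (Cadd (Cadd pair_AB cross1_entry) pair_AA) inner_entry)
       (Cadd (Cadd pair_BB cross2_entry) pair_BA).
Proof.
  unfold split_pairing. rewrite (splits_app A (h' :: B)), sumC_app, !sumC_map.
  cbn [splits]. rewrite sumC_cons, sumC_map.
  match goal with |- Cadd ?SA (Cadd ?N ?SB) = _ =>
    assert (EA : SA = Cadd (Cadd pair_AB cross1_entry) pair_AA);
    [| assert (EN : N = inner_entry);
    [| assert (EB : SB = Cadd (Cadd pair_BB cross2_entry) pair_BA); [| rewrite EA, EN, EB; ring]]]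
  end.
  - unfold pair_AB, cross1_entry, pair_AA. rewrite <- !sumC_add.
    apply sumC_ext; intros [[p' y] s'] Hin. simpl_proj.
    destruct (splits_Forall _ _ _ _ _ Hin HA) as (G1 & G2 & G3).
    rewrite <- (app_assoc s' (h' :: B) a), (phi_word_rot s' ((h' :: B) ++ a)).
    change (((h' :: B) ++ a) ++ s') with (h' :: ((B ++ a) ++ s')). rewrite <- (app_assoc B a s').
    rewrite (phi_word_cons h' (B ++ a ++ s')) by (auto; rewrite !Forall_app; auto).
    rewrite (splits_app B (a ++ s')), sumC_app, !sumC_map, (splits_app a s'), sumC_app, !sumC_map.
    apply Cmul_add3_eq; apply sumC_scale_eq; intros [[pp z] ss] _; simpl_proj; unfold ipH_pair; ring.
  - unfold inner_entry. simpl_proj. rewrite app_nil_r. reflexivity.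
  - unfold pair_BB, cross2_entry, pair_BA. rewrite <- !sumC_add.
    apply sumC_ext; intros [[pB y] sB] Hin. simpl_proj.
    destruct (splits_Forall _ _ _ _ _ Hin HB) as (G1 & G2 & G3).
    rewrite (app_assoc b A (h' :: pB)), (phi_word_rot (b ++ A) (h' :: pB)).
    change ((h' :: pB) ++ b ++ A) with (h' :: (pB ++ b ++ A)).
    rewrite (phi_word_cons h' (pB ++ b ++ A)) by (auto; rewrite !Forall_app; auto).
    rewrite (splits_app pB (b ++ A)), sumC_app, !sumC_map, (splits_app b A), sumC_app, !sumC_map.
    apply Cmul_add3_eq_r; apply sumC_scale_eq; intros [[pp z] ss] _;
      simpl_proj; unfold ipH_pair; ring.
Qed.

Lemma delta_comb_gram c c' :
  sumC (delta_comb (c, a, b, h)) (fun u => sumC (delta_comb (c', A, B, h')) (fun v =>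
      Cmul (Cmul (fst u) (fst v)) (phi_word (snd u ++ snd v)))) =
  Cmul (Cmul c c') (Cadd inner_entry (Cadd cross1_entry cross2_entry)).
Proof.
  rewrite sumC_swap.
  transitivity (sumC (delta_comb (c', A, B, h')) (fun v =>
    Cmul (fst v) (Cmul c (split_pairing a b h (snd v))))).
  { apply sumC_ext; intros v Hv. rewrite <- (sumC_delta_comb_pairing c a b h (snd v)); auto.
    - rewrite <- sumC_mull. apply sumC_ext; intros u _. ring.
    - apply (delta_comb_ok c' A B h'); auto. }
  unfold delta_comb at 1. rewrite sumC_cons, sumC_map, sumC_app. unfold D1F, D2F.
  rewrite !sumC_map, !DXw_splits, !sumC_map. simpl_proj.
  match goal with |- Cadd ?M (Cadd ?S1 ?S2) = _ =>
    assert (E1 : S1 = Copp (Cmul (Cmul c' c) (Cadd corr_AA corr_BA)));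
    [| assert (E2 : S2 = Copp (Cmul (Cmul c' c) (Cadd corr_AB corr_BB)));
    [| rewrite E1, E2, split_pairing_delta_word] ]
  end.
  - unfold corr_AA, corr_BA. rewrite <- sumC_add, <- sumC_mull, <- sumC_opp.
    apply sumC_ext; intros [[p' y] s'] Hin. simpl_proj.
    unfold split_pairing. rewrite (splits_app p' B), sumC_app, !sumC_map.
    apply Copp_Cmul_add2_eq; apply sumC_scale_eq; intros [[pp x] ss] _; simpl_proj.
    + rewrite <- (app_assoc ss B a). ring.
    + ring.
  - unfold corr_AB, corr_BB. rewrite <- sumC_add, <- sumC_mull, <- sumC_opp.
    apply sumC_ext; intros [[p' y] s'] Hin. simpl_proj.
    unfold split_pairing. rewrite (splits_app A s'), sumC_app, !sumC_map.
    apply Copp_Cmul_add2_eq; apply sumC_scale_eq; intros [[pp x] ss] _; simpl_proj.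
    + rewrite <- (app_assoc ss s' a). ring.
    + ring.
  - rewrite pair_AB_corr, pair_AA_corr, pair_BB_corr, pair_BA_corr. ring.
Qed.

End GramEntry.

(** * The square of the divergence *)

Definition adjoint_term (l : Cx * word * word * step) : Cx * word * word * step :=
  match l with (c, m1, m2, h) => (Cconj c, rev m2, rev m1, h) end.

Lemma sumC_delta_comb_adjoint (F : Cx -> word -> Cx) c' m1 m2 h' :
  ok h' -> Forall ok m1 -> Forall ok m2 ->
  sumC (delta_comb (c', m1, m2, h')) (fun v => F (Cconj (fst v)) (rev (snd v))) =
  sumC (delta_comb (adjoint_term (c', m1, m2, h'))) (fun v => F (fst v) (snd v)).
Proof.
  intros Hh H1 H2. unfold adjoint_term, delta_comb. rewrite !sumC_cons, !sumC_map, !sumC_app.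
  unfold D1F, D2F.
  rewrite !sumC_map, !DXw_splits, !sumC_map, !splits_rev, !sumC_rev, !sumC_map. simpl_proj.
  rewrite (rev_app_distr m1 (h' :: m2)). change (rev (h' :: m2)) with (rev m2 ++ [h']).
  rewrite <- (app_assoc (rev m2) [h'] (rev m1)). simpl ([h'] ++ rev m1).
  match goal with |- Cadd ?M (Cadd ?S1 ?S2) = Cadd ?M' (Cadd ?T1 ?T2) =>
    assert (E1 : S1 = T2); [|assert (E2 : S2 = T1); [| rewrite E1, E2; ring]] end.
  - apply sumC_ext; intros [[p y] s] Hin. simpl_proj.
    destruct (splits_Forall _ _ _ _ _ Hin H1) as (G1 & G2 & G3).
    rewrite Cconj_opp, !Cconj_mul, Cconj_ipH, Cconj_phi_word, rev_app_distr by auto. reflexivity.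
  - apply sumC_ext; intros [[p y] s] Hin. simpl_proj.
    destruct (splits_Forall _ _ _ _ _ Hin H2) as (G1 & G2 & G3).
    rewrite Cconj_opp, !Cconj_mul, Cconj_ipH, Cconj_phi_word, rev_app_distr by auto. reflexivity.
Qed.

Definition gram_entry (i l : Cx * word * word * step) : Cx :=
  match i, l with (c, a, b, h), (c', a', b', h') =>
    Cmul (Cmul c (Cconj c')) (Cadd (inner_entry a b (rev b') (rev a') h h')
       (Cadd (cross1_entry a b (rev b') (rev a') h h') (cross2_entry a b (rev b') (rev a') h h')))
  end.

Lemma Uelt_ok_term U : Uelt_ok T U ->
  forall i, In i U -> match i with (c, a, b, h) => ok h /\ Forall ok a /\ Forall ok b end.
Proof.
  intros H i Hi. unfold Uelt_ok in H. rewrite Forall_forall in H. apply H in Hi.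
  destruct i as [[[c a] b] h]. exact Hi.
Qed.

Lemma phi_deltaX_square U : Uelt_ok T U ->
  phi (amul (deltaX U) (astar (deltaX U))) = sumC U (fun i => sumC U (fun l => gram_entry i l)).
Proof.
  intros HU. rewrite deltaX_comb, phi_ev_comb_astar.
  2:{ rewrite Forall_forall. intros v Hv. apply in_flat_map in Hv. destruct Hv as [i [Hi Hv]].
      pose proof (Uelt_ok_term U HU i Hi) as Hi'. destruct i as [[[c a] b] h].
      destruct Hi' as (G1 & G2 & G3). exact (delta_comb_ok c a b h G1 G2 G3 v Hv). }
  rewrite sumC_flat_map. apply sumC_ext; intros i Hi.
  rewrite (sumC_ext _ (fun u => sumC U (fun l => sumC (delta_comb l) (fun v =>
    Cmul (Cmul (fst u) (Cconj (fst v))) (phi_word (snd u ++ rev (snd v))))))).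
  2:{ intros u _. apply sumC_flat_map. }
  rewrite sumC_swap. apply sumC_ext; intros l Hl.
  pose proof (Uelt_ok_term U HU i Hi) as Hi'. pose proof (Uelt_ok_term U HU l Hl) as Hl'.
  destruct i as [[[c a] b] h], l as [[[c' a'] b'] h'].
  destruct Hi' as (G1 & G2 & G3), Hl' as (K1 & K2 & K3).
  transitivity (sumC (delta_comb (c, a, b, h)) (fun u =>
    sumC (delta_comb (adjoint_term (c', a', b', h'))) (fun v =>
      Cmul (Cmul (fst u) (fst v)) (phi_word (snd u ++ snd v))))).
  { apply sumC_ext; intros u _.
    exact (sumC_delta_comb_adjoint (fun cv wv => Cmul (Cmul (fst u) cv) (phi_word (snd u ++ wv)))
             c' a' b' h' K1 K2 K3). }
  simpl adjoint_term. rewrite (delta_comb_gram a b (rev b') (rev a') h h'); auto using Forall_rev.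
Qed.

(** * Positivity of [normV2] *)

Definition Vterm := (Cx * word * word * word * step * step)%type.

Definition V_kernel (x y : Vterm) : Cx :=
  match x, y with (c, a, b, d, hs, ht), (c', a', b', d', hs', ht') =>
    Cmul (Cmul (ipH hs hs') (ipH ht ht'))
      (Cmul (Cmul c (Cconj c'))
        (Cmul (phi (amul (ev a) (astar (ev a'))))
          (Cmul (phi (amul (ev b) (astar (ev b')))) (phi (amul (ev d) (astar (ev d')))))))
  end.

Lemma normV2_V_kernel V : normV2 V = sumC V (fun x => sumC V (fun y => V_kernel x y)).
Proof.
  unfold Defs.normV2. rewrite csum_sumC, sumC_flat_map.
  apply sumC_ext; intros [[[[[c a] b] d] hs] ht] _.
  rewrite sumC_map. apply sumC_ext; intros [[[[[c' a'] b'] d'] hs'] ht'] _. reflexivity.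
Qed.

Definition Vterm_ok (x : Vterm) : Prop := match x with (c, a, b, d, hs, ht) => ok hs /\ ok ht end.

(* [V_kernel] is the entrywise product of five Gram kernels, [<.,.>_H]
   being the Gram kernel of [X(.)] by [ipH_phi_Xh]. *)
Lemma normV2_nonneg V : Forall Vterm_ok V -> 0 <= Re (normV2 V).
Proof.
  intros HV.
  set (gram := fun (e : Vterm -> P) (x y : Vterm) => phi (amul (e x) (astar (e y)))).
  set (K := fun x y : Vterm =>
    Cmul (Cmul (Cmul (Cmul (Cmul C1
      (gram (fun v => let '(_, a, _, _, _, _) := v in ev a) x y))
      (gram (fun v => let '(_, _, b, _, _, _) := v in ev b) x y))
      (gram (fun v => let '(_, _, _, d, _, _) := v in ev d) x y))
      (gram (fun v => let '(_, _, _, _, hs, _) := v in Xh hs) x y))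
      (gram (fun v => let '(_, _, _, _, _, ht) := v in Xh ht) x y)).
  assert (HK : psd Vterm K).
  { unfold K, gram. do 5 apply schur_product_psd. apply psd_one. }
  specialize (HK (map (fun x => (let '(c, _, _, _, _, _) := x in c, x)) V)).
  unfold quad_form in HK. rewrite !sumC_map in HK. rewrite normV2_V_kernel.
  erewrite sumC_ext; [exact HK|]. intros x Hx. simpl. rewrite sumC_map.
  apply sumC_ext; intros y Hy. simpl.
  rewrite Forall_forall in HV. pose proof (HV y Hy) as Hyo.
  destruct x as [[[[[c a] b] d] hs] ht], y as [[[[[c' a'] b'] d'] hs'] ht'].
  destruct Hyo as [Y1 Y2]. unfold K, gram, V_kernel.
  rewrite !Xh_selfadjoint, <- !ipH_phi_Xh by auto. ring.
Qed.

(** * The cross terms *)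

Definition Uterm := (Cx * word * word * step)%type.

Definition swap_times (x : Vterm) : Vterm :=
  match x with (c, a, b, d, hs, ht) => (c, a, b, d, ht, hs) end.
Definition neg_swap_times (x : Vterm) : Vterm :=
  match x with (c, a, b, d, hs, ht) => (Copp c, a, b, d, ht, hs) end.
Definition term_left (l : Uterm) : word := match l with (c, a, b, h) => a end.
Definition term_right (l : Uterm) : word := match l with (c, a, b, h) => b end.

Lemma sumC_D1U (f : Vterm -> Cx) U : sumC (D1U U) f =
  sumC U (fun i => match i with (c, m1, m2, h) =>
    sumC (splits m1) (fun u => match u with (p, k, s) => f (c, p, s, m2, h, k) end) end).
Proof.
  unfold D1U. rewrite sumC_flat_map. apply sumC_ext; intros [[[c m1] m2] h] _.
  unfold D1F. rewrite !sumC_map, DXw_splits, sumC_map. apply sumC_ext; intros [[p k] s] _.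
  reflexivity.
Qed.

Lemma sumC_D2U (f : Vterm -> Cx) U : sumC (D2U U) f =
  sumC U (fun i => match i with (c, m1, m2, h) =>
    sumC (splits m2) (fun u => match u with (p, k, s) => f (c, m1, p, s, h, k) end) end).
Proof.
  unfold D2U. rewrite sumC_flat_map. apply sumC_ext; intros [[[c m1] m2] h] _.
  unfold D2F. rewrite !sumC_map, DXw_splits, sumC_map. apply sumC_ext; intros [[p k] s] _.
  reflexivity.
Qed.

Definition gram_inner U := sumC U (fun i => sumC U (fun l =>
  match i, l with (c, a, b, h), (c', a', b', h') =>
    Cmul (Cmul c (Cconj c')) (inner_entry a b (rev b') (rev a') h h') end)).
Definition cross1 U := sumC U (fun i => sumC U (fun l =>
  match i, l with (c, a, b, h), (c', a', b', h') =>
    Cmul (Cmul c (Cconj c')) (cross1_entry a b (rev b') (rev a') h h') end)).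
Definition cross2 U := sumC U (fun i => sumC U (fun l =>
  match i, l with (c, a, b, h), (c', a', b', h') =>
    Cmul (Cmul c (Cconj c')) (cross2_entry a b (rev b') (rev a') h h') end)).

Definition overlap12 U :=
  sumC (D1U U) (fun x => sumC (D2U U) (fun y => V_kernel x (swap_times y))).
Definition overlap21 U :=
  sumC (D2U U) (fun x => sumC (D1U U) (fun y => V_kernel (swap_times x) y)).

Lemma sumC_gram_entry U :
  sumC U (fun i => sumC U (fun l => gram_entry i l)) =
  Cadd (gram_inner U) (Cadd (cross1 U) (cross2 U)).
Proof.
  unfold gram_inner, cross1, cross2. rewrite <- !sumC_add. apply sumC_ext; intros i _.
  rewrite <- !sumC_add. apply sumC_ext; intros l _.
  destruct i as [[[c a] b] h], l as [[[c' a'] b'] h']. unfold gram_entry. ring.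
Qed.

Lemma gram_inner_normU2 U : Uelt_ok T U -> gram_inner U = normU2 U.
Proof.
  intros HU. unfold gram_inner, Defs.normU2. rewrite csum_sumC, sumC_flat_map.
  apply sumC_ext; intros [[[c a] b] h] Hi.
  rewrite sumC_map. apply sumC_ext; intros [[[c' a'] b'] h'] Hl. simpl_proj.
  pose proof (Uelt_ok_term U HU _ Hl) as (K1 & K2 & K3).
  rewrite !phi_ev_astar by auto. unfold inner_entry. rewrite (phi_word_rot (rev a') a). ring.
Qed.

Definition cross1_summand (i l : Uterm) (v u : word * step * word) : Cx :=
  match i, l, v, u with (c, a, b, h), (c', a', b', h'), (pq, y, sq), (pa, z, sa) =>
    Cmul (Cmul c (Cconj c')) (Cmul (ipH_pair h h' y z)
      (Cmul (phi_word (b ++ rev sq)) (Cmul (phi_word (rev a' ++ pa)) (phi_word (sa ++ rev pq)))))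
  end.

Lemma cross1_overlap12 U : Uelt_ok T U -> cross1 U = overlap12 U.
Proof.
  intros HU. unfold cross1, overlap12. rewrite sumC_D1U. apply sumC_ext; intros [[[c a] b] h] Hi.
  transitivity (sumC U (fun l => sumC (splits (term_right l)) (fun v =>
    sumC (splits a) (fun u => cross1_summand (c, a, b, h) l v u)))).
  { apply sumC_ext; intros [[[c' a'] b'] h'] Hl. simpl_proj. unfold cross1_entry.
    rewrite splits_rev, sumC_rev, sumC_map, <- sumC_mull.
    apply sumC_ext; intros [[pq y] sq] _. simpl_proj. rewrite <- sumC_mull.
    apply sumC_ext; intros [[pa z] sa] _. reflexivity. }
  rewrite sumC_swap3. apply sumC_ext; intros [[pa z] sa] Hu. simpl_proj.
  rewrite sumC_D2U. apply sumC_ext; intros [[[c' a'] b'] h'] Hl. simpl term_right.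
  apply sumC_ext; intros [[pq y] sq] Hv. simpl_proj.
  pose proof (Uelt_ok_term U HU _ Hl) as (K1 & K2 & K3).
  destruct (splits_Forall _ _ _ _ _ Hv K3) as (G1 & G2 & G3).
  unfold cross1_summand, V_kernel, swap_times, ipH_pair. rewrite !phi_ev_astar by auto.
  rewrite (phi_word_rot pa (rev a')), (ipH_sym z h'). ring.
Qed.

Definition cross2_summand (i l : Uterm) (v u : word * step * word) : Cx :=
  match i, l, v, u with (c, a, b, h), (c', a', b', h'), (pp, y, sp), (pb, z, sb) =>
    Cmul (Cmul c (Cconj c')) (Cmul (ipH_pair h h' y z)
      (Cmul (phi_word (rev pp ++ a)) (Cmul (phi_word (rev sp ++ pb)) (phi_word (sb ++ rev b')))))
  end.

Lemma cross2_overlap21 U : Uelt_ok T U -> cross2 U = overlap21 U.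
Proof.
  intros HU. unfold cross2, overlap21. rewrite sumC_D2U. apply sumC_ext; intros [[[c a] b] h] Hi.
  transitivity (sumC U (fun l => sumC (splits (term_left l)) (fun v =>
    sumC (splits b) (fun u => cross2_summand (c, a, b, h) l v u)))).
  { apply sumC_ext; intros [[[c' a'] b'] h'] Hl. simpl_proj. unfold cross2_entry.
    rewrite splits_rev, sumC_rev, sumC_map, <- sumC_mull.
    apply sumC_ext; intros [[pp y] sp] _. simpl_proj. rewrite <- sumC_mull.
    apply sumC_ext; intros [[pb z] sb] _. reflexivity. }
  rewrite sumC_swap3. apply sumC_ext; intros [[pb z] sb] Hu. simpl_proj.
  rewrite sumC_D1U. apply sumC_ext; intros [[[c' a'] b'] h'] Hl. simpl term_left.
  apply sumC_ext; intros [[pp y] sp] Hv. simpl_proj.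
  pose proof (Uelt_ok_term U HU _ Hl) as (K1 & K2 & K3).
  destruct (splits_Forall _ _ _ _ _ Hv K2) as (G1 & G2 & G3).
  unfold cross2_summand, V_kernel, swap_times, ipH_pair. rewrite !phi_ev_astar by auto.
  rewrite (phi_word_rot a (rev pp)), (phi_word_rot pb (rev sp)), (ipH_sym z h'). ring.
Qed.

Lemma normV2_D1U_sub_swap_D2U U : normV2 (D1U U ++ map neg_swap_times (D2U U)) =
  Cadd (Cadd (normV2 (D1U U)) (normV2 (D2U U))) (Copp (Cadd (overlap12 U) (overlap21 U))).
Proof.
  rewrite !normV2_V_kernel. unfold overlap12, overlap21. rewrite !sumC_app, !sumC_map.
  rewrite (sumC_ext (fun x => sumC (D1U U ++ map neg_swap_times (D2U U)) (fun y => V_kernel x y))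
    (fun x => Cadd (sumC (D1U U) (fun y => V_kernel x y))
                   (Copp (sumC (D2U U) (fun y => V_kernel x (swap_times y)))))).
  2:{ intros x _. rewrite sumC_app, sumC_map. f_equal. rewrite <- sumC_opp.
      apply sumC_ext; intros y _.
      destruct x as [[[[[c a] b] d] hs] ht], y as [[[[[c' a'] b'] d'] hs'] ht'].
      unfold V_kernel, neg_swap_times, swap_times; cbv beta iota zeta. rewrite Cconj_opp. ring. }
  rewrite (sumC_ext (fun x => sumC (D1U U ++ map neg_swap_times (D2U U))
                                   (fun y => V_kernel (neg_swap_times x) y))
    (fun x => Cadd (Copp (sumC (D1U U) (fun y => V_kernel (swap_times x) y)))
                   (sumC (D2U U) (fun y => V_kernel x y)))).
  2:{ intros x _. rewrite sumC_app, sumC_map. f_equal.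
      - rewrite <- sumC_opp. apply sumC_ext; intros y _.
        destruct x as [[[[[c a] b] d] hs] ht], y as [[[[[c' a'] b'] d'] hs'] ht'].
        unfold V_kernel, neg_swap_times, swap_times; cbv beta iota zeta. ring.
      - apply sumC_ext; intros y _.
        destruct x as [[[[[c a] b] d] hs] ht], y as [[[[[c' a'] b'] d'] hs'] ht'].
        unfold V_kernel, neg_swap_times, swap_times; cbv beta iota zeta. rewrite Cconj_opp. ring. }
  rewrite !sumC_add, !sumC_opp. unfold Vterm. ring.
Qed.

Lemma D1U_sub_swap_D2U_ok U :
  Uelt_ok T U -> Forall Vterm_ok (D1U U ++ map neg_swap_times (D2U U)).
Proof.
  intros HU. rewrite Forall_app, Forall_map. split; rewrite Forall_forall; intros x Hx.
  - unfold D1U in Hx. apply in_flat_map in Hx. destruct Hx as [[[[c m1] m2] h] [Hi Hx]].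
    destruct (Uelt_ok_term U HU _ Hi) as (G1 & G2 & G3).
    unfold D1F in Hx. rewrite DXw_splits, !map_map in Hx. apply in_map_iff in Hx.
    destruct Hx as [[[p k] s] [<- Hs]].
    destruct (splits_Forall _ _ _ _ _ Hs G2) as (K1 & K2 & K3). simpl. auto.
  - unfold D2U in Hx. apply in_flat_map in Hx. destruct Hx as [[[[c m1] m2] h] [Hi Hx]].
    destruct (Uelt_ok_term U HU _ Hi) as (G1 & G2 & G3).
    unfold D2F in Hx. rewrite DXw_splits, !map_map in Hx. apply in_map_iff in Hx.
    destruct Hx as [[[p k] s] [<- Hs]].
    destruct (splits_Forall _ _ _ _ _ Hs G3) as (K1 & K2 & K3). simpl. auto.
Qed.

Lemma phi_deltaX_square_identity U : Uelt_ok T U ->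
  Re (phi (amul (deltaX U) (astar (deltaX U)))) + Re (normV2 (D1U U ++ map neg_swap_times (D2U U))) =
  Re (normU2 U) + Re (normV2 (D1U U)) + Re (normV2 (D2U U)).
Proof.
  intros HU.
  rewrite phi_deltaX_square, sumC_gram_entry, gram_inner_normU2, cross1_overlap12, cross2_overlap21,
    normV2_D1U_sub_swap_D2U by exact HU.
  simpl. ring.
Qed.

End Divergence.

Theorem mainTheorem4 (P : NCPS) (T : R) (X : R -> P) (U : Uelt) :
  0 < T ->
  semicircular P T X ->
  Uelt_ok T U ->
  L2norm P (deltaX P X U) <= D12norm P X U.
Proof.
  intros _ HS HU. unfold L2norm, D12norm. apply sqrt_le_1_alt.
  pose proof (phi_deltaX_square_identity P T X HS U HU) as Hid.
  pose proof (normV2_nonneg P T X HS _ (D1U_sub_swap_D2U_ok T U HU)) as Hpos.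
  lra.
Qed.
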